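(* Let $n\ge 1$ and let $\omega\subset\mathbb{R}^n$ be a non-empty open set. Then there exists a constant $C=C(\omega)>1$ such that for every $N\in\mathbb{N}$ and every $f\in\mathcal{E}_N$, $$\|f\|_{L^2(\mathbb{R}^n)}\le C\,e^{\frac12 N\ln(N+1)+CN}\,\|f\|_{L^2(\omega)}.$$
   Context: The one-dimensional Hermite functions are $\phi_k(x)=\frac{(-1)^k}{\sqrt{2^k k!\sqrt{\pi}}}e^{x^2/2}\frac{d^k}{dx^k}(e^{-x^2})$, $k\in\mathbb{N}=\{0,1,2,\dots\}$, $x\in\mathbb{R}$. For $\alpha=(\alpha_1,\dots,\alpha_n)\in\mathbb{N}^n$ and $x\in\mathbb{R}^n$, $\Phi_\alpha(x)=\prod_{j=1}^n\phi_{\alpha_j}(x_j)$, and $|\alpha|=\alpha_1+\dots+\alpha_n$. For $N\in\mathbb{N}$, $\mathcal{E}_N=\mathrm{Span}_{\mathbb{C}}\{\Phi_\alpha:\alpha\in\mathbb{N}^n,\ |\alpha|\le N\}$. *)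

From Stdlib Require Import Reals List ZArith Lia.
Import ListNotations.
Open Scope R_scope.

(* Points of R^n are functions nat -> R; only coordinates j < n matter. *)
Definition Rn := nat -> R.

Inductive nth_deriv : nat -> (R -> R) -> (R -> R) -> Prop :=
| nth_deriv_O (f : R -> R) : nth_deriv 0 f f
| nth_deriv_S (k : nat) (f g h : R -> R) :
    nth_deriv k f g -> (forall x, derivable_pt_lim g x (h x)) ->
    nth_deriv (S k) f h.

Definition hermite_functions (phi : nat -> R -> R) : Prop :=
  forall k : nat, exists g : R -> R,
    nth_deriv k (fun x => exp (- (x ^ 2))) g /\
    forall x, phi k x =
      (-1) ^ k / sqrt (2 ^ k * INR (fact k) * sqrt PI) * exp (x ^ 2 / 2) * g x.

(* All multi-indices alpha in N^n with |alpha| <= N, as lists of length n. *)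
Fixpoint multi_indices (n N : nat) : list (list nat) :=
  match n with
  | O => [nil]
  | S m => flat_map (fun a => map (cons a) (multi_indices m (N - a))) (seq 0 (S N))
  end.

Fixpoint prodn (n : nat) (F : nat -> R) : R :=
  match n with O => 1 | S m => prodn m F * F m end.

Definition Phi (phi : nat -> R -> R) (n : nat) (alpha : list nat) (x : Rn) : R :=
  prodn n (fun j => phi (nth j alpha 0%nat) (x j)).

Definition combo (phi : nat -> R -> R) (n N : nat) (c : list nat -> R) (x : Rn) : R :=
  fold_right (fun alpha acc => c alpha * Phi phi n alpha x + acc) 0
             (multi_indices n N).

(* f = combo c + i combo d  (general element of E_N, complex coefficients
   c_alpha + i d_alpha); |f(x)|^2 : *)
Definition abs2_f (phi : nat -> R -> R) (n N : nat) (c d : list nat -> R) (x : Rn) : R :=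
  (combo phi n N c x) ^ 2 + (combo phi n N d x) ^ 2.

Definition open_n (n : nat) (A : Rn -> Prop) : Prop :=
  forall x, A x -> exists r, 0 < r /\
    forall y, (forall j, (j < n)%nat -> Rabs (y j - x j) < r) -> A y.

(* A depends only on the first n coordinates, i.e. is a subset of R^n. *)
Definition subset_Rn (n : nat) (A : Rn -> Prop) : Prop :=
  forall x y, (forall j, (j < n)%nat -> x j = y j) -> A x -> A y.

Definition dcube (n k : nat) (z : nat -> Z) (x : Rn) : Prop :=
  forall j, (j < n)%nat ->
    IZR (z j) / 2 ^ k <= x j <= (IZR (z j) + 1) / 2 ^ k.

(* Lower Darboux sums of g over finitely many pairwise distinct dyadic cubes
   (of a common level k) contained in A; each cube Q carries a lower bound m_Q
   of g on Q. *)
Definition lower_sum (n : nat) (A : Rn -> Prop) (g : Rn -> R) (s : R) : Prop :=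
  exists (k : nat) (cs : list ((nat -> Z) * R)),
    ForallOrdPairs (fun p q => exists l, (l < n)%nat /\ fst p l <> fst q l) cs /\
    Forall (fun p => (forall x, dcube n k (fst p) x -> A x) /\
                     (forall x, dcube n k (fst p) x -> snd p <= g x)) cs /\
    s = fold_right (fun p acc => snd p / 2 ^ (k * n) + acc) 0 cs.

(* For continuous g >= 0 and open A, the supremum of the lower sums is the
   Lebesgue integral of g over A.  So for I with is_lub (lower_sum n A g) I,
   I = int_A g. *)

(* Write [f = e^{-|x|^2/2} (P + i Q)], where [P] and [Q] restrict to polynomials of degree
   at most [N] on every line.  Fix a box [B] inside [omega] and let [M] be the larger of the
   suprema of [|P|] and [|Q|] on [B].  Lagrange interpolation bounds a polynomial of degree
   [N] at distance [t] from an interval where it is at most [M] by [M (3 (1 + t))^N];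
   against the Gaussian this gives [int |f|^2 <= M^2 A^N (N + 1)^N], the factor
   [(N + 1)^N] being [max_t t^N e^{-t}] up to [C^N].  Conversely, a Markov-type Lipschitz
   bound of order [24^N M] keeps [|P|] (or [|Q|]) above [M/4] on a dyadic cube of side about
   [32^-N] next to a point where it exceeds [M/2], so [int_omega |f|^2 >= c M^2 32^(-nN)].
   Both integrals are suprema of dyadic lower sums; on the whole space these are dominated
   through the weight [prod_j 1 / (1 + x_j^2)], whose dyadic sums are at most [4^n]. *)

From Stdlib Require Import Reals List ZArith Lra Lia FunctionalExtensionality Classical.
Import ListNotations.
Open Scope R_scope.

Lemma Rabs_le_inv x b : Rabs x <= b -> - b <= x <= b.
Proof. pose proof (Rle_abs x). pose proof (Rle_abs (- x)). rewrite Rabs_Ropp in *. lra. Qed.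

Lemma exp_le_exp x y : x <= y -> exp x <= exp y.
Proof. intros [Hlt | ->]; [left; apply exp_increasing; auto | right; auto]. Qed.

Lemma exp_pow x m : exp x ^ m = exp (INR m * x).
Proof.
  induction m; [simpl; rewrite Rmult_0_l, exp_0; auto|].
  rewrite S_INR, Rmult_plus_distr_r, Rmult_1_l, exp_plus, <- IHm. simpl; ring.
Qed.

Lemma sq_le_of_Rabs_le a b : 0 <= b -> Rabs a <= b -> a ^ 2 <= b ^ 2.
Proof. intros Hb Ha. rewrite <- pow2_abs. apply pow_incr. split; [apply Rabs_pos | auto]. Qed.

(** * Polynomial functions of one variable *)

Inductive is_poly : nat -> (R -> R) -> Prop :=
| is_poly_cst (c : R) (f : R -> R) : (forall x, f x = c) -> is_poly 0 f
| is_poly_horner (d : nat) (c : R) (g f : R -> R) :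
    is_poly d g -> (forall x, f x = c + x * g x) -> is_poly (S d) f.

Lemma is_poly_ext d f g : is_poly d f -> (forall x, f x = g x) -> is_poly d g.
Proof.
  intros [c f' Hf | d' c h f' Hh Hf] E.
  - apply (is_poly_cst c); intro x; rewrite <- E; auto.
  - apply (is_poly_horner d' c h); auto; intro x; rewrite <- E; auto.
Qed.

Lemma is_poly_const d c : is_poly d (fun _ => c).
Proof.
  revert c; induction d; intro c.
  - apply (is_poly_cst c); auto.
  - apply (is_poly_horner d c (fun _ => 0)); auto; intro; ring.
Qed.

Lemma is_poly_succ d f : is_poly d f -> is_poly (S d) f.
Proof.
  revert f; induction d; intros f Hf.
  - inversion Hf as [c f' Ef|]; subst.
    apply (is_poly_horner 0 c (fun _ => 0)); [apply is_poly_const|].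
    intro x; rewrite Ef; ring.
  - inversion Hf as [|d' c g f' Hg Ef]; subst.
    apply (is_poly_horner (S d) c g); auto.
Qed.

Lemma is_poly_le d e f : (d <= e)%nat -> is_poly d f -> is_poly e f.
Proof. induction 1; auto using is_poly_succ. Qed.

Lemma is_poly_plus d f g :
  is_poly d f -> is_poly d g -> is_poly d (fun x => f x + g x).
Proof.
  revert f g; induction d; intros f g Hf Hg.
  - inversion Hf as [c1 f1 E1|]; inversion Hg as [c2 g2 E2|]; subst.
    apply (is_poly_cst (c1 + c2)); intro; rewrite E1, E2; auto.
  - inversion Hf as [|d1 c1 f1 f' H1 E1]; inversion Hg as [|d2 c2 g2 g' H2 E2]; subst.
    apply (is_poly_horner d (c1 + c2) (fun x => f1 x + g2 x)); auto.
    intro x; rewrite E1, E2; ring.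
Qed.

Lemma is_poly_scal d a f : is_poly d f -> is_poly d (fun x => a * f x).
Proof.
  revert f; induction d; intros f Hf.
  - inversion Hf as [c f' Ef|]; subst.
    apply (is_poly_cst (a * c)); intro; rewrite Ef; auto.
  - inversion Hf as [|d' c g f' Hg Ef]; subst.
    apply (is_poly_horner d (a * c) (fun x => a * g x)); auto.
    intro x; rewrite Ef; ring.
Qed.

Lemma is_poly_mulX d f : is_poly d f -> is_poly (S d) (fun x => x * f x).
Proof. intro H; apply (is_poly_horner d 0 f); auto; intro; ring. Qed.

Lemma is_poly_mult d e f g :
  is_poly d f -> is_poly e g -> is_poly (d + e) (fun x => f x * g x).
Proof.
  revert f; induction d; intros f Hf Hg.
  - inversion Hf as [c f' Ef|]; subst.
    apply (is_poly_ext _ (fun x => c * g x)); [apply is_poly_scal; auto|].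
    intro; rewrite Ef; auto.
  - inversion Hf as [|d' c h f' Hh Ef]; subst.
    apply (is_poly_ext _ (fun x => c * g x + x * (h x * g x))).
    + apply is_poly_plus.
      * apply (is_poly_le e); [lia|]. apply is_poly_scal; auto.
      * apply is_poly_mulX. apply IHd; auto.
    + intro x; rewrite Ef; ring.
Qed.

Lemma is_poly_affine d f a b : is_poly d f -> is_poly d (fun t => f (a + b * t)).
Proof.
  revert f; induction d; intros f Hf.
  - inversion Hf as [c f' Ef|]; subst. apply (is_poly_cst c); auto.
  - inversion Hf as [|d' c g f' Hg Ef]; subst.
    apply (is_poly_ext _ (fun t => (c + a * g (a + b * t)) + t * (b * g (a + b * t)))).
    + apply is_poly_plus.
      * apply is_poly_succ, is_poly_plus; [apply is_poly_const|].
        apply is_poly_scal; auto.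
      * apply is_poly_mulX, is_poly_scal; auto.
    + intro t; rewrite Ef; ring.
Qed.

Lemma is_poly_factor d f s : is_poly (S d) f ->
  exists r, is_poly d r /\ forall t, f t - f s = (t - s) * r t.
Proof.
  revert f; induction d; intros f Hf;
    inversion Hf as [|d' c g f' Hg Ef]; subst.
  - inversion Hg as [c' g' Eg|]; subst.
    exists (fun _ => c'); split; [apply is_poly_const|].
    intro t; rewrite !Ef, !Eg; ring.
  - destruct (IHd g Hg) as [r [Hr Er]].
    exists (fun t => g t + s * r t); split.
    + apply is_poly_plus; auto. apply is_poly_succ, is_poly_scal; auto.
    + intro t; rewrite !Ef. specialize (Er t). nra.
Qed.

Lemma is_poly_eq0_roots d f (rs : list R) :
  is_poly d f -> NoDup rs -> (S d <= length rs)%nat ->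
  (forall r, In r rs -> f r = 0) -> forall t, f t = 0.
Proof.
  revert f rs; induction d; intros f rs Hf Hnd Hlen Hroot t;
    (destruct rs as [|r rs]; simpl in Hlen; [lia|]).
  - inversion Hf as [c f' Ef|]; subst.
    rewrite Ef, <- (Ef r). apply Hroot; left; auto.
  - destruct (is_poly_factor d f r Hf) as [q [Hq Eq]].
    inversion Hnd as [|a l Hr Hnd']; subst.
    assert (Hq0 : forall t, q t = 0).
    { apply (IHd q rs Hq Hnd'); [lia|].
      intros r' Hin.
      assert (Hne : r' - r <> 0) by (intro; apply Hr; replace r with r' by lra; auto).
      specialize (Eq r').
      rewrite (Hroot r' (or_intror Hin)), (Hroot r (or_introl eq_refl)) in Eq.
      apply (Rmult_eq_reg_l (r' - r)); auto. lra. }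
    specialize (Eq t). rewrite Hq0, (Hroot r (or_introl eq_refl)) in Eq. lra.
Qed.

Lemma is_poly_derive d f : is_poly d f ->
  exists f', is_poly d f' /\ forall x, derivable_pt_lim f x (f' x).
Proof.
  revert f; induction d; intros f Hf.
  - inversion Hf as [c f' Ef|]; subst.
    exists (fun _ => 0); split; [apply is_poly_const|].
    replace f with (fun _ : R => c) by (apply functional_extensionality; auto).
    intro; apply derivable_pt_lim_const.
  - inversion Hf as [|d' c g f' Hg Ef]; subst.
    destruct (IHd g Hg) as [g' [Hg' Dg']].
    exists (fun x => g x + x * g' x); split.
    + apply is_poly_plus; [apply is_poly_succ; auto | apply is_poly_mulX; auto].
    + intro x.
      replace f with (fun x => c + x * g x) by (apply functional_extensionality; auto).
      replace (g x + x * g' x) with (0 + (1 * g x + x * g' x)) by ring.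
      apply (derivable_pt_lim_plus (fun _ => c) (fun x => x * g x)).
      * apply derivable_pt_lim_const.
      * apply (derivable_pt_lim_mult id g); [apply derivable_pt_lim_id | auto].
Qed.

Lemma is_poly_bounded d f a b : is_poly d f ->
  exists B, forall t, a <= t <= b -> Rabs (f t) <= B.
Proof.
  revert f; induction d; intros f Hf.
  - inversion Hf as [c f' Ef|]; subst. exists (Rabs c); intros; rewrite Ef; lra.
  - inversion Hf as [|d' c g f' Hg Ef]; subst.
    destruct (IHd g Hg) as [B HB].
    exists (Rabs c + (Rabs a + Rabs b) * Rabs B). intros t Ht. rewrite Ef.
    eapply Rle_trans; [apply Rabs_triang|]. rewrite Rabs_mult.
    apply Rplus_le_compat_l. apply Rmult_le_compat; try apply Rabs_pos.
    + apply Rabs_le. pose proof (Rabs_pos a). pose proof (Rabs_pos b).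
      pose proof (Rle_abs b). pose proof (Rle_abs (- a)). rewrite Rabs_Ropp in *. lra.
    + eapply Rle_trans; [apply HB; auto | apply Rle_abs].
Qed.

Lemma is_poly_sum_f_R0 d m (F : nat -> R -> R) :
  (forall i, (i <= m)%nat -> is_poly d (F i)) ->
  is_poly d (fun t => sum_f_R0 (fun i => F i t) m).
Proof.
  induction m; intros H; simpl.
  - apply H; lia.
  - apply (is_poly_plus d (fun t => sum_f_R0 (fun i => F i t) m) (F (S m))); auto.
Qed.

Lemma prodn_ext m F G : (forall j, (j < m)%nat -> F j = G j) -> prodn m F = prodn m G.
Proof. induction m; simpl; intros; auto. rewrite IHm, H; auto; lia. Qed.

Lemma prodn_eq0 m F j : (j < m)%nat -> F j = 0 -> prodn m F = 0.
Proof.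
  induction m; simpl; intros; [lia|].
  destruct (Nat.eq_dec j m); [subst; rewrite H0; ring|]. rewrite IHm; [ring|lia|auto].
Qed.

Lemma prodn_eq1 m F : (forall j, (j < m)%nat -> F j = 1) -> prodn m F = 1.
Proof. induction m; simpl; intros; auto. rewrite IHm, H; auto; try lia; ring. Qed.

Lemma prodn_mult m F G : prodn m (fun j => F j * G j) = prodn m F * prodn m G.
Proof. induction m; simpl; [ring|]. rewrite IHm; ring. Qed.

Lemma prodn_const m c : prodn m (fun _ => c) = c ^ m.
Proof. induction m; simpl; auto. rewrite IHm; ring. Qed.

Lemma prodn_nonneg m F : (forall j, (j < m)%nat -> 0 <= F j) -> 0 <= prodn m F.
Proof. induction m; simpl; intros; [lra|]. apply Rmult_le_pos; auto. Qed.

Lemma prodn_pos m F : (forall j, (j < m)%nat -> 0 < F j) -> 0 < prodn m F.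
Proof. induction m; simpl; intros; [lra|]. apply Rmult_lt_0_compat; auto. Qed.

Lemma prodn_le m F G :
  (forall j, (j < m)%nat -> 0 <= F j <= G j) -> prodn m F <= prodn m G.
Proof.
  induction m; simpl; intros H; [lra|].
  apply Rmult_le_compat; try apply H; try lia.
  - apply prodn_nonneg; intros; apply H; lia.
  - apply IHm; intros; apply H; lia.
Qed.

Lemma Rabs_prodn m F : Rabs (prodn m F) = prodn m (fun j => Rabs (F j)).
Proof. induction m; simpl; [apply Rabs_R1|]. rewrite Rabs_mult, IHm; auto. Qed.

Lemma prodn_inv m F : prodn m (fun j => / F j) = / prodn m F.
Proof. induction m; simpl; [lra|]. rewrite IHm, Rinv_mult; auto. Qed.

Lemma prodn_update m F j0 c : (j0 < m)%nat ->
  prodn m (fun j => if Nat.eqb j j0 then c * F j else F j) = c * prodn m F.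
Proof.
  induction m; intros Hj; [lia|]. simpl.
  destruct (Nat.eqb_spec m j0).
  - subst. rewrite (prodn_ext j0 _ F); [ring|].
    intros j Hj'. destruct (Nat.eqb_spec j j0); [lia|auto].
  - rewrite IHm by lia. ring.
Qed.

Lemma prodn_skip_const m i c : (i < m)%nat ->
  prodn m (fun j => if Nat.eqb j i then 1 else c) = c ^ (m - 1).
Proof.
  assert (Below : forall k, (k <= i)%nat ->
            prodn k (fun j => if Nat.eqb j i then 1 else c) = c ^ k).
  { induction k; simpl; intros; auto. rewrite IHk by lia.
    destruct (Nat.eqb_spec k i); [lia|ring]. }
  induction m; intros Hi; [lia|]. simpl.
  destruct (Nat.eqb_spec m i).
  - subst. rewrite Below, Nat.sub_0_r by lia. ring.
  - rewrite IHm by lia. destruct m; [lia|]. simpl. rewrite Nat.sub_0_r. ring.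
Qed.

Lemma INR_fact_S k : INR (fact (S k)) = INR (S k) * INR (fact k).
Proof. rewrite fact_simpl, mult_INR; auto. Qed.

Lemma prodn_skip_dist d i : (i <= d)%nat ->
  prodn (S d) (fun j => if Nat.eqb j i then 1 else Rabs (INR i - INR j))
  = INR (fact i) * INR (fact (d - i)).
Proof.
  intros Hid.
  set (P := fun m => prodn m (fun j => if Nat.eqb j i then 1 else Rabs (INR i - INR j))).
  assert (Below : forall m, (m <= i)%nat -> P m * INR (fact (i - m)) = INR (fact i)).
  { induction m; intros Hm; unfold P in *; simpl.
    - rewrite Nat.sub_0_r; ring.
    - destruct (Nat.eqb_spec m i); [lia|].
      rewrite <- IHm by lia.
      replace (i - m)%nat with (S (i - S m)) by lia.
      rewrite INR_fact_S, Rabs_right.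
      + rewrite S_INR, minus_INR, S_INR by lia. ring.
      + assert (INR m < INR i) by (apply lt_INR; lia). lra. }
  assert (Above : forall k, P (S i + k)%nat = INR (fact i) * INR (fact k)).
  { induction k.
    - unfold P; simpl. rewrite Nat.add_0_r, Nat.eqb_refl.
      fold (P i). rewrite <- (Below i), Nat.sub_diag by lia. simpl. ring.
    - replace (S i + S k)%nat with (S (S i + k)) by lia.
      change (P (S (S i + k))) with
        (P (S i + k)%nat * (if Nat.eqb (S i + k) i then 1 else Rabs (INR i - INR (S i + k)))).
      rewrite IHk.
      destruct (Nat.eqb_spec (S i + k) i); [lia|].
      rewrite INR_fact_S, Rabs_left1.
      + rewrite plus_INR, !S_INR. ring.
      + rewrite plus_INR, S_INR. pose proof (pos_INR k). lra. }
  fold (P (S d)). replace (S d) with (S i + (d - i))%nat by lia. apply Above.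
Qed.

Fixpoint sumn_nat (m : nat) (F : nat -> nat) : nat :=
  match m with O => O | S k => (sumn_nat k F + F k)%nat end.

Lemma sumn_nat_skip m i : (i < m)%nat ->
  sumn_nat m (fun j => if Nat.eqb j i then 0%nat else 1%nat) = (m - 1)%nat.
Proof.
  assert (Below : forall k, (k <= i)%nat ->
            sumn_nat k (fun j => if Nat.eqb j i then 0%nat else 1%nat) = k).
  { induction k; simpl; intros; auto. rewrite IHk by lia.
    destruct (Nat.eqb_spec k i); lia. }
  induction m; intros; [lia|]. simpl.
  destruct (Nat.eqb_spec m i).
  - subst. rewrite Below; lia.
  - rewrite IHm by lia. lia.
Qed.

Lemma sumn_nat_shift m F : sumn_nat (S m) F = (F 0%nat + sumn_nat m (fun j => F (S j)))%nat.
Proof. induction m; simpl in *; [lia|]. rewrite IHm. lia. Qed.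

Lemma is_poly_prodn m (F : nat -> R -> R) deg :
  (forall j, (j < m)%nat -> is_poly (deg j) (F j)) ->
  is_poly (sumn_nat m deg) (fun t => prodn m (fun j => F j t)).
Proof.
  induction m; simpl; intros H.
  - apply is_poly_const.
  - apply (is_poly_mult _ _ (fun t => prodn m (fun j => F j t)) (F m)).
    + apply IHm; intros; apply H; lia.
    + apply H; lia.
Qed.

Fixpoint sumn (m : nat) (F : nat -> R) : R :=
  match m with O => 0 | S k => sumn k F + F k end.

Lemma sumn_nonneg m F : (forall j, (j < m)%nat -> 0 <= F j) -> 0 <= sumn m F.
Proof. induction m; simpl; intros; [lra|]. apply Rplus_le_le_0_compat; auto. Qed.

Lemma sumn_ge_term m F j :
  (forall j, (j < m)%nat -> 0 <= F j) -> (j < m)%nat -> F j <= sumn m F.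
Proof.
  induction m; simpl; intros HF Hj; [lia|].
  pose proof (HF m ltac:(lia)).
  destruct (Nat.eq_dec j m).
  - subst. pose proof (sumn_nonneg m F ltac:(intros; apply HF; lia)). lra.
  - pose proof (IHm ltac:(intros; apply HF; lia) ltac:(lia)). lra.
Qed.

Lemma sumn_le m F G : (forall j, (j < m)%nat -> F j <= G j) -> sumn m F <= sumn m G.
Proof. induction m; simpl; intros; [lra|]. apply Rplus_le_compat; auto. Qed.

Lemma sumn_plus m F G : sumn m (fun j => F j + G j) = sumn m F + sumn m G.
Proof. induction m; simpl; [ring|]. rewrite IHm; ring. Qed.

Lemma sumn_const m c : sumn m (fun _ => c) = INR m * c.
Proof. induction m; simpl; [ring|]. rewrite IHm. destruct m; simpl; ring. Qed.

(** * Lagrange interpolation and Markov-type bounds *)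

Definition interp_node (d i : nat) : R := -1 + 2 * INR i / INR d.

Definition lagrange_basis (d i : nat) (t : R) : R :=
  prodn (S d) (fun j => if Nat.eqb j i then 1
                        else (t - interp_node d j) / (interp_node d i - interp_node d j)).

Lemma interp_node_inj d i j : (0 < d)%nat -> interp_node d i = interp_node d j -> i = j.
Proof.
  intros Hd E. unfold interp_node in E. assert (0 < INR d) by (apply lt_0_INR; lia).
  apply INR_eq. apply (Rmult_eq_reg_r (2 / INR d)).
  - unfold Rdiv in *. lra.
  - apply Rgt_not_eq, Rdiv_lt_0_compat; lra.
Qed.

Lemma interp_node_sub d i j : (0 < d)%nat ->
  interp_node d i - interp_node d j = 2 * (INR i - INR j) / INR d.
Proof. intros; unfold interp_node; field. apply not_0_INR; lia. Qed.

Lemma Rabs_interp_node_le d j : (0 < d)%nat -> (j <= d)%nat -> Rabs (interp_node d j) <= 1.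
Proof.
  intros Hd Hj. unfold interp_node. assert (0 < INR d) by (apply lt_0_INR; lia).
  assert (0 <= INR j <= INR d) by (split; [apply pos_INR | apply le_INR; auto]).
  assert (INR j = INR j / INR d * INR d) by (field; lra).
  assert (0 <= INR j / INR d <= 1) by (split; nra).
  apply Rabs_le. unfold Rdiv in *. lra.
Qed.

Lemma is_poly_lagrange_basis d i : (i <= d)%nat -> is_poly d (lagrange_basis d i).
Proof.
  intros Hi. unfold lagrange_basis.
  replace d with (sumn_nat (S d) (fun j => if Nat.eqb j i then 0%nat else 1%nat)) at 1
    by (rewrite sumn_nat_skip; lia).
  apply is_poly_prodn. intros j Hj. destruct (Nat.eqb j i); [apply is_poly_const|].
  apply (is_poly_horner 0 (- interp_node d j / (interp_node d i - interp_node d j))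
           (fun _ => / (interp_node d i - interp_node d j))).
  - apply is_poly_const.
  - intro x. unfold Rdiv. ring.
Qed.

Lemma lagrange_basis_node d i k : (0 < d)%nat -> (i <= d)%nat -> (k <= d)%nat ->
  lagrange_basis d i (interp_node d k) = if Nat.eqb k i then 1 else 0.
Proof.
  intros Hd Hi Hk. unfold lagrange_basis. destruct (Nat.eqb_spec k i).
  - subst. apply prodn_eq1. intros j Hj. destruct (Nat.eqb_spec j i); auto.
    field. intro E. apply n. symmetry. apply (interp_node_inj d); auto. lra.
  - apply (prodn_eq0 _ _ k); [lia|].
    destruct (Nat.eqb_spec k i); [lia|]. unfold Rdiv; ring.
Qed.

Lemma sum_f_R0_kronecker d k (F : nat -> R) : (k <= d)%nat ->
  sum_f_R0 (fun i => F i * (if Nat.eqb k i then 1 else 0)) d = F k.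
Proof.
  induction d; intros Hk; simpl.
  - replace k with 0%nat by lia. simpl. ring.
  - destruct (Nat.eq_dec k (S d)).
    + subst. rewrite Nat.eqb_refl.
      rewrite (sum_eq _ (fun _ => 0 * 0)), <- scal_sum; [ring|].
      intros i Hi. destruct (Nat.eqb_spec (S d) i); [lia|ring].
    + rewrite IHd by lia. destruct (Nat.eqb_spec k (S d)); [lia|ring].
Qed.

Lemma lagrange_interpolation d p : (0 < d)%nat -> is_poly d p ->
  forall t, p t = sum_f_R0 (fun i => p (interp_node d i) * lagrange_basis d i t) d.
Proof.
  intros Hd Hp.
  set (q := fun t => p t + (-1) * sum_f_R0 (fun i => p (interp_node d i) * lagrange_basis d i t) d).
  assert (Hq : is_poly d q).
  { apply is_poly_plus; auto. apply is_poly_scal.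
    apply (is_poly_sum_f_R0 d d (fun i t => p (interp_node d i) * lagrange_basis d i t)).
    intros i Hi. apply is_poly_scal, is_poly_lagrange_basis; auto. }
  assert (Hq0 : forall t, q t = 0).
  { apply (is_poly_eq0_roots d q (map (interp_node d) (seq 0 (S d)))); auto.
    - apply NoDup_map_NoDup_ForallPairs; [|apply seq_NoDup].
      intros i j _ _. apply interp_node_inj; auto.
    - rewrite length_map, length_seq; lia.
    - intros r Hr. apply in_map_iff in Hr as [k [<- Hk]]. apply in_seq in Hk. unfold q.
      rewrite (sum_eq _ (fun i => p (interp_node d i) * (if Nat.eqb k i then 1 else 0))).
      + rewrite sum_f_R0_kronecker by lia. ring.
      + intros i Hi. rewrite lagrange_basis_node by lia.
        destruct (Nat.eqb_spec k i), (Nat.eqb_spec i k); auto; lia. }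
  intro t. specialize (Hq0 t). unfold q in Hq0. lra.
Qed.

Lemma Rabs_lagrange_basis_le d i t : (0 < d)%nat -> (i <= d)%nat ->
  Rabs (lagrange_basis d i t)
  <= ((1 + Rabs t) * INR d / 2) ^ d * / (INR (fact i) * INR (fact (d - i))).
Proof.
  intros Hd Hi. unfold lagrange_basis. rewrite Rabs_prodn.
  assert (Hd' : 0 < INR d) by (apply lt_0_INR; lia).
  eapply Rle_trans.
  - apply (prodn_le _ _ (fun j => (if Nat.eqb j i then 1 else (1 + Rabs t) * INR d / 2) *
                                  / (if Nat.eqb j i then 1 else Rabs (INR i - INR j)))).
    intros j Hj. split; [apply Rabs_pos|].
    destruct (Nat.eqb_spec j i); [rewrite Rabs_R1; lra|].
    assert (Hij : 0 < Rabs (INR i - INR j)).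
    { apply Rabs_pos_lt. intro E. apply n. apply INR_eq. lra. }
    assert (Hnum : Rabs (t - interp_node d j) <= 1 + Rabs t).
    { pose proof (Rabs_interp_node_le d j Hd ltac:(lia)).
      eapply Rle_trans; [apply Rabs_triang|]. rewrite Rabs_Ropp. lra. }
    rewrite interp_node_sub by lia. unfold Rdiv.
    rewrite Rabs_mult, Rabs_inv, !Rabs_mult, Rabs_inv, (Rabs_right 2), (Rabs_right (INR d))
      by lra.
    replace (/ (2 * Rabs (INR i - INR j) * / INR d)) with (INR d / 2 * / Rabs (INR i - INR j))
      by (field; lra).
    replace ((1 + Rabs t) * INR d * / 2 * / Rabs (INR i - INR j)) with
      ((1 + Rabs t) * (INR d / 2 * / Rabs (INR i - INR j))) by (unfold Rdiv; ring).
    apply Rmult_le_compat_r; auto.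
    apply Rmult_le_pos; [lra | left; apply Rinv_0_lt_compat; auto].
  - rewrite prodn_mult, prodn_inv, prodn_skip_const, prodn_skip_dist by lia.
    replace (S d - 1)%nat with d by lia. lra.
Qed.

Lemma pow_succ_le d : INR (S d) ^ d <= 3 * INR d ^ d.
Proof.
  destruct d as [|m]; [simpl; lra|].
  assert (Hm : 0 < INR (S m)) by (apply lt_0_INR; lia).
  replace (INR (S (S m))) with (INR (S m) * (1 + / INR (S m)))
    by (rewrite (S_INR (S m)); field; lra).
  rewrite Rpow_mult_distr.
  assert ((1 + / INR (S m)) ^ S m <= 3).
  { apply Rle_trans with (exp (/ INR (S m)) ^ S m).
    - apply pow_incr. pose proof (exp_ineq1_le (/ INR (S m))).
      assert (0 < / INR (S m)) by (apply Rinv_0_lt_compat; lra). lra.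
    - rewrite exp_pow, Rinv_r by lra. apply exp_le_3. }
  assert (0 <= INR (S m) ^ S m) by (apply pow_le; lra). nra.
Qed.

Lemma pow_self_le_fact d : INR d ^ d <= 3 ^ d * INR (fact d).
Proof.
  induction d; [simpl; lra|].
  rewrite INR_fact_S. change (INR (S d) ^ S d) with (INR (S d) * INR (S d) ^ d).
  pose proof (pow_succ_le d). pose proof (pos_INR (S d)).
  replace (3 ^ S d * (INR (S d) * INR (fact d)))
    with (INR (S d) * (3 * (3 ^ d * INR (fact d)))) by (simpl; ring).
  apply Rmult_le_compat_l; auto. lra.
Qed.

Lemma sum_inv_fact_prod d :
  sum_f_R0 (fun i => / (INR (fact i) * INR (fact (d - i)))) d = 2 ^ d / INR (fact d).
Proof.
  replace 2 with (1 + 1) by ring. rewrite binomial.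
  unfold Rdiv. rewrite Rmult_comm, scal_sum.
  apply sum_eq. intros i Hi. unfold C. rewrite !pow1.
  pose proof (INR_fact_lt_0 d). pose proof (INR_fact_lt_0 i). pose proof (INR_fact_lt_0 (d - i)).
  field; lra.
Qed.

(* Interpolate at [d + 1] equispaced nodes of [-1, 1]; then [d^d <= 3^d d!]. *)
Lemma poly_growth d p M : is_poly d p -> (forall t, -1 <= t <= 1 -> Rabs (p t) <= M) ->
  forall t, Rabs (p t) <= M * (3 * (1 + Rabs t)) ^ d.
Proof.
  intros Hp HM t.
  assert (HM0 : 0 <= M) by (pose proof (HM 0 ltac:(lra)); pose proof (Rabs_pos (p 0)); lra).
  destruct d as [|d'].
  - inversion Hp as [c f Ef|]; subst. rewrite Ef, <- (Ef 0), Rmult_1_r. apply HM; lra.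
  - set (d := S d'). assert (Hd : (0 < d)%nat) by (unfold d; lia).
    assert (Ht : 0 <= (1 + Rabs t) ^ d) by (apply pow_le; pose proof (Rabs_pos t); lra).
    pose proof (pow_self_le_fact d). pose proof (INR_fact_lt_0 d).
    rewrite (lagrange_interpolation d p Hd Hp t).
    eapply Rle_trans; [apply sum_f_R0_triangle|].
    eapply Rle_trans.
    + apply (sum_Rle _ (fun i => ((1 + Rabs t) * INR d / 2) ^ d
                                 * / (INR (fact i) * INR (fact (d - i))) * M)).
      intros i Hi. rewrite Rabs_mult, Rmult_comm.
      apply Rmult_le_compat; try apply Rabs_pos.
      * apply Rabs_lagrange_basis_le; auto.
      * apply HM, Rabs_le_inv, Rabs_interp_node_le; auto.
    + rewrite <- scal_sum.
      rewrite (sum_eq _ (fun i => / (INR (fact i) * INR (fact (d - i)))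
                                  * ((1 + Rabs t) * INR d / 2) ^ d)) by (intros; ring).
      rewrite <- scal_sum, sum_inv_fact_prod.
      apply Rmult_le_compat_l; auto.
      unfold Rdiv. rewrite !Rpow_mult_distr, pow_inv.
      replace ((1 + Rabs t) ^ d * INR d ^ d * / 2 ^ d * (2 ^ d * / INR (fact d)))
        with ((1 + Rabs t) ^ d * (INR d ^ d / INR (fact d)))
        by (field; split; [lra | apply pow_nonzero; lra]).
      rewrite (Rmult_comm (3 ^ d)). apply Rmult_le_compat_l; auto.
      apply (Rmult_le_reg_r (INR (fact d))); [lra|].
      unfold Rdiv. rewrite Rmult_assoc, Rinv_l; lra.
Qed.

Lemma poly_growth_interval d p M c h : 0 < h -> is_poly d p ->
  (forall t, c - h <= t <= c + h -> Rabs (p t) <= M) ->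
  forall t, Rabs (p t) <= M * (3 * (1 + Rabs (t - c) / h)) ^ d.
Proof.
  intros Hh Hp HM t.
  set (q := fun u => p (c + h * u)).
  replace (p t) with (q ((t - c) / h)) by (unfold q; f_equal; field; lra).
  eapply Rle_trans; [apply (poly_growth d q M); [apply is_poly_affine; auto|]|].
  - intros u Hu. unfold q. apply HM. split; nra.
  - unfold Rdiv. rewrite Rabs_mult, Rabs_inv, (Rabs_right h) by lra. lra.
Qed.

Lemma divided_difference_bound q r s u M :
  (forall t, q t - q s = (t - s) * r t) -> Rabs (q u) <= M -> Rabs (q s) <= M ->
  1 / 2 <= Rabs (u - s) -> Rabs (r u) <= 4 * M.
Proof.
  intros Er Hu Hs Hus.
  assert (Hdiff : Rabs (q u - q s) <= 2 * M).
  { eapply Rle_trans; [apply Rabs_triang|]. rewrite Rabs_Ropp. lra. }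
  rewrite Er, Rabs_mult in Hdiff. pose proof (Rabs_pos (r u)). nra.
Qed.

(* Markov-type bound: divide [q t - q s] by [t - s] and control the quotient on a
   quarter of [-1, 1] at distance [1/2] from [s], then extend it by [poly_growth]. *)
Lemma poly_lipschitz_unit d q M : is_poly d q ->
  (forall t, -1 <= t <= 1 -> Rabs (q t) <= M) ->
  forall s t, -1 <= s <= 1 -> -1 <= t <= 1 ->
  Rabs (q t - q s) <= 4 * M * 24 ^ d * Rabs (t - s).
Proof.
  intros Hq HM s t Hs Ht.
  destruct d as [|d].
  - inversion Hq as [c f Ef|]; subst. rewrite !Ef, Rminus_diag, Rabs_R0.
    pose proof (HM 0 ltac:(lra)). pose proof (Rabs_pos (q 0)).
    apply Rmult_le_pos; [simpl; lra | apply Rabs_pos].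
  - destruct (is_poly_factor d q s Hq) as [r [Hr Er]].
    rewrite Er, Rabs_mult, (Rmult_comm (4 * M * 24 ^ S d)).
    apply Rmult_le_compat_l; [apply Rabs_pos|].
    set (c := if Rle_dec s 0 then 3 / 4 else - (3 / 4)).
    assert (Hfar : forall u, c - 1/4 <= u <= c + 1/4 -> 1 / 2 <= Rabs (u - s)).
    { intros u Hu. unfold c in Hu. destruct (Rle_dec s 0).
      - rewrite Rabs_right; lra.
      - rewrite Rabs_left1; lra. }
    assert (Hrc : forall u, c - 1/4 <= u <= c + 1/4 -> Rabs (r u) <= 4 * M).
    { intros u Hu. apply (divided_difference_bound q r s u M Er); auto.
      apply HM. unfold c in Hu. destruct (Rle_dec s 0); lra. }
    assert (Htc : 0 <= 3 * (1 + Rabs (t - c) / (1 / 4)) <= 24).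
    { assert (Rabs (t - c) <= 7 / 4) by (apply Rabs_le; unfold c; destruct (Rle_dec s 0); lra).
      replace (Rabs (t - c) / (1 / 4)) with (4 * Rabs (t - c)) by field.
      pose proof (Rabs_pos (t - c)). lra. }
    eapply Rle_trans; [apply (poly_growth_interval d r (4 * M) c (1 / 4)); auto; lra|].
    pose proof (HM s Hs). pose proof (Rabs_pos (q s)).
    apply Rmult_le_compat_l; [lra|].
    apply Rle_trans with (24 ^ d); [apply pow_incr; auto|].
    simpl. pose proof (pow_le 24 d ltac:(lra)). lra.
Qed.

Lemma poly_lipschitz d p M c h : 0 < h -> is_poly d p ->
  (forall t, c - h <= t <= c + h -> Rabs (p t) <= M) ->
  forall s t, c - h <= s <= c + h -> c - h <= t <= c + h ->
  Rabs (p t - p s) <= 4 * M * 24 ^ d / h * Rabs (t - s).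
Proof.
  intros Hh Hp HM s t Hs Ht.
  set (q := fun u => p (c + h * u)).
  assert (Eq : forall v, p v = q ((v - c) / h)) by (intro; unfold q; f_equal; field; lra).
  assert (Hunit : forall v, c - h <= v <= c + h -> -1 <= (v - c) / h <= 1).
  { intros v Hv. assert (E : (v - c) / h * h = v - c) by (field; lra). split; nra. }
  rewrite (Eq t), (Eq s).
  eapply Rle_trans.
  - apply (poly_lipschitz_unit d q M); auto.
    + apply is_poly_affine; auto.
    + intros u Hu. unfold q. apply HM. split; nra.
  - replace ((t - c) / h - (s - c) / h) with ((t - s) / h) by (field; lra).
    unfold Rdiv. rewrite Rabs_mult, Rabs_inv, (Rabs_right h) by lra. right; ring.
Qed.

(** * Hermite functions *)

Lemma gauss_derive x :
  derivable_pt_lim (fun y => exp (- (y ^ 2))) x (exp (- (x ^ 2)) * (- (2 * x))).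
Proof.
  replace (fun y => exp (- (y ^ 2))) with (comp exp (fun y => - (y * y)))
    by (apply functional_extensionality; intro y; unfold comp; f_equal; ring).
  apply (derivable_pt_lim_comp (fun y => - (y * y)) exp x).
  - replace (- (2 * x)) with (- (1 * x + x * 1)) by ring.
    apply (derivable_pt_lim_opp (fun y => y * y)).
    apply (derivable_pt_lim_mult id id); apply derivable_pt_lim_id.
  - replace (- (x * x)) with (- (x ^ 2)) by ring. apply derivable_pt_lim_exp.
Qed.

Lemma nth_deriv_gauss k g : nth_deriv k (fun x => exp (- (x ^ 2))) g ->
  exists H, is_poly k H /\ forall x, g x = H x * exp (- (x ^ 2)).
Proof.
  remember (fun x => exp (- (x ^ 2))) as gauss eqn:Egauss.
  induction 1 as [f | k f g h Hk IH Hd].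
  - exists (fun _ => 1); split; [apply is_poly_const|]. intro; subst; ring.
  - destruct (IH Egauss) as [H [HH EH]].
    destruct (is_poly_derive k H HH) as [H' [HH' DH']].
    exists (fun x => H' x + (-2) * (x * H x)); split.
    + apply is_poly_plus; [apply is_poly_succ; auto|]. apply is_poly_scal, is_poly_mulX; auto.
    + intro x.
      replace g with (fun y => H y * exp (- (y ^ 2))) in Hd
        by (apply functional_extensionality; auto).
      assert (D : derivable_pt_lim (fun y => H y * exp (- (y ^ 2))) x
                    (H' x * exp (- (x ^ 2)) + H x * (exp (- (x ^ 2)) * (- (2 * x))))).
      { apply (derivable_pt_lim_mult H (fun y => exp (- (y ^ 2)))); auto. apply gauss_derive. }
      rewrite (uniqueness_limite _ x (h x) _ (Hd x) D). ring.
Qed.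

Definition hermite_poly (phi : nat -> R -> R) (k : nat) (x : R) : R :=
  phi k x * exp (x ^ 2 / 2).

Lemma is_poly_hermite_poly phi k : hermite_functions phi -> is_poly k (hermite_poly phi k).
Proof.
  intros Hh. destruct (Hh k) as [g [Hg Ephi]].
  destruct (nth_deriv_gauss k g Hg) as [H [HH EH]].
  apply (is_poly_ext k (fun x => ((-1) ^ k / sqrt (2 ^ k * INR (fact k) * sqrt PI)) * H x)).
  - apply is_poly_scal; auto.
  - intro x. unfold hermite_poly. rewrite Ephi, EH.
    assert (E : exp (x ^ 2 / 2) * exp (- (x ^ 2)) * exp (x ^ 2 / 2) = 1).
    { rewrite <- !exp_plus, <- exp_0. f_equal. field. }
    rewrite <- (Rmult_1_r (_ * H x)), <- E. ring.
Qed.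

Lemma hermite_factor phi k x : phi k x = exp (- (x ^ 2) / 2) * hermite_poly phi k x.
Proof.
  unfold hermite_poly. rewrite <- (Rmult_1_r (phi k x)) at 1.
  rewrite <- exp_0. replace 0 with (- (x ^ 2) / 2 + x ^ 2 / 2) by field.
  rewrite exp_plus. ring.
Qed.

(** * Polynomials on boxes of R^n *)

Definition box (n : nat) (x0 : Rn) (rho : R) (x : Rn) : Prop :=
  forall j, (j < n)%nat -> Rabs (x j - x0 j) <= rho.

Lemma box_center n x0 rho : 0 <= rho -> box n x0 rho x0.
Proof. intros Hr j _. rewrite Rminus_diag, Rabs_R0. auto. Qed.

Definition l1_dist (n : nat) (x y : Rn) : R := sumn n (fun j => Rabs (x j - y j)).

Lemma l1_dist_nonneg n x y : 0 <= l1_dist n x y.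
Proof. apply sumn_nonneg; intros; apply Rabs_pos. Qed.

Lemma l1_dist_ge_coord n x y j : (j < n)%nat -> Rabs (x j - y j) <= l1_dist n x y.
Proof. intros; apply (sumn_ge_term n (fun j => Rabs (x j - y j))); auto; intros; apply Rabs_pos. Qed.

Definition is_poly_Rn (n N : nat) (P : Rn -> R) : Prop :=
  (forall a v : Rn, is_poly N (fun t => P (fun j => a j + t * v j))) /\
  (forall x y : Rn, (forall j, (j < n)%nat -> x j = y j) -> P x = P y).

Lemma is_poly_Rn_growth n N P x0 rho M : is_poly_Rn n N P -> 0 < rho ->
  (forall x, box n x0 rho x -> Rabs (P x) <= M) ->
  forall x, Rabs (P x) <= M * (3 * (1 + l1_dist n x x0 / rho)) ^ N.
Proof.
  intros [Hline Hext] Hr HM x.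
  set (S := l1_dist n x x0).
  assert (HS0 : 0 <= S) by apply l1_dist_nonneg.
  assert (HM0 : 0 <= M).
  { pose proof (HM x0 (box_center n x0 rho ltac:(lra))). pose proof (Rabs_pos (P x0)). lra. }
  destruct (Req_dec S 0) as [E|NE].
  - rewrite E, Rdiv_0_l, Rplus_0_r, Rmult_1_r.
    rewrite (Hext x x0).
    + eapply Rle_trans; [apply HM, box_center; lra|].
      rewrite <- (Rmult_1_r M) at 1. apply Rmult_le_compat_l, pow_R1_Rle; lra.
    + intros j Hj. pose proof (l1_dist_ge_coord n x x0 j Hj) as Hc. fold S in Hc.
      pose proof (Rabs_le_inv (x j - x0 j) 0 ltac:(lra)). lra.
  - set (v := fun j => rho * (x j - x0 j) / S).
    set (q := fun t => P (fun j => x0 j + t * v j)).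
    replace (P x) with (q (S / rho)) by (apply Hext; intros j _; unfold v; field; lra).
    eapply Rle_trans; [apply (poly_growth N q M); [apply Hline|]|].
    + intros t Ht. apply HM. intros j Hj.
      replace (x0 j + t * v j - x0 j) with (t * (rho * / S) * (x j - x0 j))
        by (unfold v; field; lra).
      pose proof (l1_dist_ge_coord n x x0 j Hj) as Hc. fold S in Hc.
      assert (Hrs : 0 < rho * / S) by (apply Rmult_lt_0_compat; [|apply Rinv_0_lt_compat]; lra).
      rewrite Rabs_mult, Rabs_mult, (Rabs_right (rho * / S)) by lra.
      assert (Rabs t <= 1) by (apply Rabs_le; lra).
      assert (rho * / S * Rabs (x j - x0 j) <= rho).
      { replace rho with (rho * / S * S) at 2 by (field; lra).
        apply Rmult_le_compat_l; lra. }
      pose proof (Rabs_pos t). pose proof (Rabs_pos (x j - x0 j)). nra.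
    + rewrite (Rabs_right (S / rho)); [lra|].
      apply Rle_ge, Rmult_le_pos; [lra | left; apply Rinv_0_lt_compat; lra].
Qed.

(* Change one coordinate at a time and apply [poly_lipschitz] on each segment. *)
Lemma is_poly_Rn_lipschitz n N P x0 rho M : is_poly_Rn n N P -> 0 < rho ->
  (forall x, box n x0 rho x -> Rabs (P x) <= M) ->
  forall x y, box n x0 rho x -> box n x0 rho y ->
  Rabs (P y - P x) <= 4 * M * 24 ^ N / rho * l1_dist n y x.
Proof.
  intros [Hline Hext] Hr HM x y Hx Hy.
  set (z := fun m j => if Nat.ltb j m then y j else x j).
  assert (Hz : forall m, box n x0 rho (z m)).
  { intros m j Hj. unfold z. destruct (Nat.ltb j m); auto. }
  assert (Step : forall m, (m <= n)%nat ->
            Rabs (P (z m) - P x) <= 4 * M * 24 ^ N / rho * sumn m (fun j => Rabs (y j - x j))).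
  { induction m; intros Hm.
    - simpl. rewrite Rmult_0_r, (Hext (z 0%nat) x), Rminus_diag, Rabs_R0 by (intros; unfold z; auto).
      lra.
    - set (q := fun t => P (fun j => z m j + t * (if Nat.eqb j m then 1 else 0))).
      assert (E0 : q 0 = P (z m)) by (unfold q; apply Hext; intros; ring).
      assert (E1 : q (y m - x m) = P (z (S m))).
      { unfold q. apply Hext. intros j Hj. unfold z.
        destruct (Nat.eqb_spec j m), (Nat.ltb_spec j m), (Nat.ltb_spec j (S m));
          try lia; subst; ring. }
      assert (Hqb : forall t, (x0 m - x m) - rho <= t <= (x0 m - x m) + rho -> Rabs (q t) <= M).
      { intros t Ht. apply HM. intros j Hj. destruct (Nat.eqb_spec j m).
        - subst. unfold z. rewrite Nat.ltb_irrefl. apply Rabs_le. lra.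
        - rewrite Rmult_0_r, Rplus_0_r. apply Hz; auto. }
      pose proof (Rabs_le_inv _ _ (Hx m ltac:(lia))). pose proof (Rabs_le_inv _ _ (Hy m ltac:(lia))).
      pose proof (poly_lipschitz N q M (x0 m - x m) rho Hr (Hline _ _) Hqb 0 (y m - x m)) as HL.
      rewrite E0, E1, Rminus_0_r in HL.
      specialize (IHm ltac:(lia)).
      replace (P (z (S m)) - P x) with ((P (z (S m)) - P (z m)) + (P (z m) - P x)) by ring.
      eapply Rle_trans; [apply Rabs_triang|]. simpl sumn. rewrite Rmult_plus_distr_l.
      pose proof (HL ltac:(lra) ltac:(lra)). lra. }
  rewrite (Hext y (z n)); [apply Step; lia|].
  intros j Hj. unfold z. destruct (Nat.ltb_spec j n); [auto | lia].
Qed.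

Definition combo_poly (phi : nat -> R -> R) (n N : nat) (c : list nat -> R) (x : Rn) : R :=
  fold_right (fun alpha acc =>
                c alpha * prodn n (fun j => hermite_poly phi (nth j alpha 0%nat) (x j)) + acc)
             0 (multi_indices n N).

Definition gauss (n : nat) (x : Rn) : R := prodn n (fun j => exp (- (x j ^ 2) / 2)).

Lemma combo_factor phi n N c x : combo phi n N c x = gauss n x * combo_poly phi n N c x.
Proof.
  unfold combo, combo_poly. induction (multi_indices n N) as [|a l IH]; simpl; [ring|].
  rewrite IH. unfold Phi, gauss.
  rewrite (prodn_ext n _ (fun j => exp (- (x j ^ 2) / 2) * hermite_poly phi (nth j a 0%nat) (x j)))
    by (intros; apply hermite_factor).
  rewrite prodn_mult. ring.
Qed.

Lemma gauss_sq n x : gauss n x ^ 2 = prodn n (fun j => exp (- (x j ^ 2))).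
Proof.
  unfold gauss. rewrite <- Rsqr_pow2. unfold Rsqr. rewrite <- prodn_mult. apply prodn_ext; intros.
  rewrite <- exp_plus. f_equal. field.
Qed.

Lemma abs2_f_factor phi n N c d x :
  abs2_f phi n N c d x = gauss n x ^ 2 * (combo_poly phi n N c x ^ 2 + combo_poly phi n N d x ^ 2).
Proof. unfold abs2_f. rewrite !combo_factor. ring. Qed.

Lemma multi_indices_sum_le n N alpha : In alpha (multi_indices n N) ->
  (sumn_nat n (fun j => nth j alpha 0%nat) <= N)%nat.
Proof.
  revert N alpha; induction n; intros N alpha Hin; [simpl; lia|].
  change (In alpha (flat_map (fun a => map (cons a) (multi_indices n (N - a))) (seq 0 (S N))))
    in Hin.
  apply in_flat_map in Hin as [a [Ha Hin]].
  apply in_map_iff in Hin as [beta [<- Hb]].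
  apply in_seq in Ha. rewrite sumn_nat_shift. simpl.
  specialize (IHn _ _ Hb). lia.
Qed.

Lemma is_poly_Rn_combo_poly phi n N c : hermite_functions phi ->
  is_poly_Rn n N (combo_poly phi n N c).
Proof.
  intros Hh. split.
  - intros a v. unfold combo_poly.
    assert (Hall : forall alpha, In alpha (multi_indices n N) ->
              is_poly N (fun t => prodn n (fun j =>
                           hermite_poly phi (nth j alpha 0%nat) (a j + t * v j)))).
    { intros alpha Hin.
      apply (is_poly_le (sumn_nat n (fun j => nth j alpha 0%nat))); [apply multi_indices_sum_le; auto|].
      apply (is_poly_prodn n (fun j t => hermite_poly phi (nth j alpha 0%nat) (a j + t * v j))).
      intros j Hj. apply (is_poly_ext _ (fun t => hermite_poly phi (nth j alpha 0%nat) (a j + v j * t))).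
      - apply is_poly_affine, is_poly_hermite_poly; auto.
      - intro; rewrite Rmult_comm; auto. }
    induction (multi_indices n N) as [|alpha l IH]; simpl; [apply is_poly_const|].
    apply is_poly_plus.
    + apply is_poly_scal, Hall; left; auto.
    + apply IH. intros; apply Hall; right; auto.
  - intros x y E. unfold combo_poly. induction (multi_indices n N); simpl; auto.
    rewrite IHl. f_equal. f_equal. apply prodn_ext. intros; rewrite E; auto.
Qed.

Lemma prodn_bounded_box m (F : nat -> R -> R) (x0 : Rn) rho :
  (forall j, exists B, forall t, x0 j - rho <= t <= x0 j + rho -> Rabs (F j t) <= B) ->
  exists B, forall x, box m x0 rho x -> Rabs (prodn m (fun j => F j (x j))) <= B.
Proof.
  intros HF. induction m; simpl.
  - exists 1. intros. rewrite Rabs_R1; lra.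
  - destruct IHm as [B1 HB1]. destruct (HF m) as [B2 HB2].
    exists (Rabs B1 * Rabs B2). intros x Hx. rewrite Rabs_mult.
    apply Rmult_le_compat; try apply Rabs_pos.
    + eapply Rle_trans; [apply HB1|apply Rle_abs]. intros j Hj; apply Hx; lia.
    + eapply Rle_trans; [apply HB2|apply Rle_abs].
      pose proof (Rabs_le_inv _ _ (Hx m ltac:(lia))). lra.
Qed.

Lemma combo_poly_bounded_box phi n N c x0 rho : hermite_functions phi ->
  exists B, forall x, box n x0 rho x -> Rabs (combo_poly phi n N c x) <= B.
Proof.
  intros Hh. unfold combo_poly. induction (multi_indices n N) as [|alpha l [B1 HB1]]; simpl.
  - exists 0. intros; rewrite Rabs_R0; lra.
  - destruct (prodn_bounded_box n (fun j => hermite_poly phi (nth j alpha 0%nat)) x0 rho)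
      as [B2 HB2].
    { intro j. apply is_poly_bounded with (d := nth j alpha 0%nat), is_poly_hermite_poly; auto. }
    exists (Rabs (c alpha) * Rabs B2 + B1). intros x Hx.
    eapply Rle_trans; [apply Rabs_triang|]. rewrite Rabs_mult.
    apply Rplus_le_compat; [|apply HB1; auto].
    apply Rmult_le_compat_l; [apply Rabs_pos|]. eapply Rle_trans; [apply HB2; auto|apply Rle_abs].
Qed.

(** * Dyadic sums of the weight 1 / (1 + x^2) *)

Definition sum_list {A} (f : A -> R) (l : list A) : R := fold_right (fun x acc => f x + acc) 0 l.

Lemma sum_list_filter {A} (f : A -> R) (p : A -> bool) l :
  sum_list f l = sum_list f (filter p l) + sum_list f (filter (fun x => negb (p x)) l).
Proof. induction l; simpl; [ring|]. destruct (p a); simpl; rewrite IHl; ring. Qed.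

Lemma sum_list_le {A} (f g : A -> R) l : (forall x, In x l -> f x <= g x) -> sum_list f l <= sum_list g l.
Proof. induction l; simpl; intros; [lra|]. apply Rplus_le_compat; auto. Qed.

Lemma sum_list_ext {A} (f g : A -> R) l : (forall x, In x l -> f x = g x) -> sum_list f l = sum_list g l.
Proof. induction l; simpl; intros; auto. rewrite H, IHl; auto. Qed.

Lemma sum_list_mult_r {A} (f : A -> R) c l : sum_list (fun x => f x * c) l = sum_list f l * c.
Proof. induction l; simpl; [ring|]. rewrite IHl; ring. Qed.

Lemma sum_list_plus {A} (f g : A -> R) l :
  sum_list (fun x => f x + g x) l = sum_list f l + sum_list g l.
Proof. induction l; simpl; [ring|]. rewrite IHl; ring. Qed.

Lemma sum_list_map {A B} (f : B -> R) (g : A -> B) l : sum_list f (map g l) = sum_list (fun x => f (g x)) l.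
Proof. induction l; simpl; auto. rewrite IHl; auto. Qed.

Lemma sum_list_indicator (k : Z) c U : NoDup U -> In k U ->
  sum_list (fun t => if Z.eqb k t then c else 0) U = c.
Proof.
  induction U as [|t U IH]; intros Hnd Hin; [contradiction|].
  inversion Hnd as [|t' U' Ht Hnd']; subst. simpl.
  destruct (Z.eqb_spec k t) as [<-|Hne].
  - rewrite (sum_list_ext _ (fun _ => 0 * 0)), sum_list_mult_r; [ring|].
    intros t Hint. destruct (Z.eqb_spec k t); [subst; contradiction | ring].
  - destruct Hin as [->|Hin]; [contradiction|]. rewrite IH; auto. ring.
Qed.

Lemma sum_list_fibers {A} (f : A -> R) (key : A -> Z) U Ss : NoDup U ->
  (forall p, In p Ss -> In (key p) U) ->
  sum_list f Ss = sum_list (fun t => sum_list f (filter (fun p => Z.eqb (key p) t) Ss)) U.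
Proof.
  intros HU. induction Ss as [|p Ss IH]; intros Hkey.
  - simpl. rewrite (sum_list_ext _ (fun _ => 0 * 0)), sum_list_mult_r; [ring | intros; ring].
  - rewrite (sum_list_ext _ (fun t => (if Z.eqb (key p) t then f p else 0)
             + sum_list f (filter (fun q => Z.eqb (key q) t) Ss))).
    + rewrite sum_list_plus, sum_list_indicator, <- IH; auto.
      * intros q Hq; apply Hkey; right; auto.
      * apply Hkey; left; auto.
    + intros t _. simpl. destruct (Z.eqb (key p) t); simpl; ring.
Qed.

Lemma ForallOrdPairs_filter {A} (Rl : A -> A -> Prop) f l :
  ForallOrdPairs Rl l -> ForallOrdPairs Rl (filter f l).
Proof.
  induction 1 as [|a l Ha Hl IH]; simpl; [constructor|]. destruct (f a); auto.
  constructor; auto. rewrite Forall_forall in *. intros x Hx. apply filter_In in Hx as [Hx _]. auto.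
Qed.

Lemma ForallOrdPairs_impl_In {A} (Rl R' : A -> A -> Prop) l :
  (forall x y, In x l -> In y l -> Rl x y -> R' x y) -> ForallOrdPairs Rl l -> ForallOrdPairs R' l.
Proof.
  intros Himp HR. induction HR as [|a l Ha Hl IH]; constructor.
  - rewrite Forall_forall in *. intros y Hy. apply Himp; simpl; auto.
  - apply IH. intros; apply Himp; simpl; auto.
Qed.

Definition distinct_keys {A} (n : nat) (key : A -> nat -> Z) (Ss : list A) : Prop :=
  ForallOrdPairs (fun p q => exists l, (l < n)%nat /\ key p l <> key q l) Ss.

(* Discrete Fubini: group the points by their last coordinate. *)
Lemma sum_prodn_distinct_le {A} (a : Z -> R) (B : R) :
  (forall z, 0 <= a z) -> (forall L, NoDup L -> sum_list a L <= B) ->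
  forall n (key : A -> nat -> Z) Ss, distinct_keys n key Ss ->
  sum_list (fun p => prodn n (fun j => a (key p j))) Ss <= B ^ n.
Proof.
  intros Ha HL.
  assert (HB : 0 <= B) by (apply (HL []); constructor).
  induction n as [|n IH]; intros key Ss HS.
  - destruct Ss as [|x [|y Ss]]; simpl; try lra.
    inversion HS as [|a' l Hx]; subst. inversion Hx as [|? ? [l [Hl _]]]. lia.
  - set (U := nodup Z.eq_dec (map (fun p => key p n) Ss)).
    rewrite (sum_list_fibers _ (fun p => key p n) U Ss).
    2: apply NoDup_nodup.
    2: intros p Hp; apply nodup_In, (in_map (fun p => key p n)); auto.
    apply Rle_trans with (sum_list (fun t => a t * B ^ n) U).
    + apply sum_list_le. intros t _.
      rewrite (sum_list_ext _ (fun p => prodn n (fun j => a (key p j)) * a t)).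
      * rewrite sum_list_mult_r, Rmult_comm. apply Rmult_le_compat_l; [apply Ha|].
        apply IH. apply ForallOrdPairs_impl_In with (2 := ForallOrdPairs_filter _ _ _ HS).
        intros p q Hp Hq [l [Hl Hne]].
        apply filter_In in Hp as [_ Hp]. apply filter_In in Hq as [_ Hq].
        apply Z.eqb_eq in Hp, Hq.
        exists l; split; auto. destruct (Nat.eq_dec l n); [subst; congruence | lia].
      * intros p Hp. apply filter_In in Hp as [_ Hp]. apply Z.eqb_eq in Hp.
        simpl. rewrite Hp. auto.
    + rewrite sum_list_mult_r. simpl. apply Rmult_le_compat_r.
      * apply pow_le; auto.
      * apply HL, NoDup_nodup.
Qed.

Lemma filter_eqb_NoDup (t : Z) (L : list Z) : NoDup L ->
  filter (fun z => Z.eqb z t) L = [] \/ filter (fun z => Z.eqb z t) L = [t].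
Proof.
  induction L as [|a L IH]; simpl; intros Hnd; auto.
  inversion Hnd as [|? ? Ha HL]; subst. destruct (Z.eqb_spec a t); [|auto].
  subst. right. f_equal.
  destruct (IH HL) as [E|E]; auto.
  exfalso. apply Ha. assert (In t [t]) as Ht by (left; auto).
  rewrite <- E in Ht. apply filter_In in Ht as [Ht _]. auto.
Qed.

Lemma sum_list_telescope (a T : Z -> R) (K : nat) (L : list Z) : NoDup L ->
  (forall z, In z L -> (0 <= z < Z.of_nat K)%Z) ->
  (forall z, (0 <= z < Z.of_nat K)%Z -> a z <= T (z - 1)%Z - T z) ->
  (forall z, (0 <= z < Z.of_nat K)%Z -> T z <= T (z - 1)%Z) ->
  sum_list a L <= T (-1)%Z - T (Z.of_nat K - 1)%Z.
Proof.
  revert L; induction K; intros L Hnd Hin Ha HT.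
  - destruct L as [|z L]; [simpl; lra|].
    specialize (Hin z (or_introl eq_refl)). lia.
  - set (top := Z.of_nat K).
    rewrite (sum_list_filter a (fun z => Z.eqb z top)).
    assert (Htop : sum_list a (filter (fun z => Z.eqb z top) L) <= T (top - 1)%Z - T top).
    { destruct (filter_eqb_NoDup top L Hnd) as [E|E]; rewrite E; simpl.
      - pose proof (HT top ltac:(unfold top; lia)). lra.
      - pose proof (Ha top ltac:(unfold top; lia)). lra. }
    assert (Hrest : sum_list a (filter (fun z => negb (Z.eqb z top)) L)
                    <= T (-1)%Z - T (top - 1)%Z).
    { apply IHK.
      - apply NoDup_filter; auto.
      - intros z Hz. apply filter_In in Hz as [Hz Hne]. specialize (Hin z Hz).
        destruct (Z.eqb_spec z top); simpl in Hne; [discriminate|]. unfold top in *. lia.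
      - intros; apply Ha; lia.
      - intros; apply HT; lia. }
    replace (Z.of_nat (S K) - 1)%Z with top by (unfold top; lia).
    lra.
Qed.

Definition far_end (z : Z) : R := if Z.leb 0 z then IZR z + 1 else IZR z.

(* The side [1/u] of the cube [[z/u, (z+1)/u]] times [1 / (1 + t^2)] at its endpoint
   [t = far_end z / u] farthest from 0; over distinct [z] these sum to at most [4]
   (a Riemann sum for the integral [pi]). *)
Definition dyadic_weight (u : R) (z : Z) : R := u / (u ^ 2 + far_end z ^ 2).

Lemma dyadic_weight_nonneg u z : 0 < u -> 0 <= dyadic_weight u z.
Proof.
  intros Hu; unfold dyadic_weight. apply Rlt_le, Rdiv_lt_0_compat; auto.
  pose proof (pow2_ge_0 (far_end z)). nra.
Qed.

Lemma dyadic_weight_reflect u z : dyadic_weight u (-1 - z) = dyadic_weight u z.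
Proof.
  unfold dyadic_weight, far_end. f_equal. f_equal.
  destruct (Z.leb_spec 0 (-1 - z)), (Z.leb_spec 0 z); try lia;
    rewrite minus_IZR; simpl; ring.
Qed.

Lemma dyadic_weight_telescope u z : 1 <= u -> (0 <= z)%Z ->
  dyadic_weight u z <= 2 * u / (u + IZR (z - 1) + 1) - 2 * u / (u + IZR z + 1).
Proof.
  intros Hu Hz. unfold dyadic_weight, far_end.
  destruct (Z.leb_spec 0 z); [|lia].
  rewrite minus_IZR. assert (0 <= IZR z) by (apply IZR_le; lia).
  set (m := IZR z + 1). assert (Hm : 1 <= m) by (unfold m; lra).
  replace (2 * u / (u + (IZR z - 1) + 1) - 2 * u / (u + IZR z + 1))
    with (2 * u / ((u + m - 1) * (u + m))) by (unfold m; field; lra).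
  assert (Hpos : 0 < (u + m - 1) * (u + m)) by nra.
  assert ((u + m - 1) * (u + m) <= 2 * (u ^ 2 + m ^ 2)) by (pose proof (pow2_ge_0 (u - m)); nra).
  unfold Rdiv. apply (Rmult_le_reg_r ((u ^ 2 + m ^ 2) * ((u + m - 1) * (u + m)))); [nra|].
  replace (u * / (u ^ 2 + m ^ 2) * ((u ^ 2 + m ^ 2) * ((u + m - 1) * (u + m))))
    with (u * ((u + m - 1) * (u + m))) by (field; nra).
  replace (2 * u * / ((u + m - 1) * (u + m)) * ((u ^ 2 + m ^ 2) * ((u + m - 1) * (u + m))))
    with (u * (2 * (u ^ 2 + m ^ 2))) by (field; split; lra).
  apply Rmult_le_compat_l; lra.
Qed.

Lemma list_Z_bounded (L : list Z) : exists K : nat, forall z, In z L -> (z < Z.of_nat K)%Z.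
Proof.
  induction L as [|a L [K HK]]; [exists 0%nat; simpl; tauto|].
  exists (K + Z.to_nat (Z.abs a) + 1)%nat. intros z [E|Hz]; [subst|specialize (HK z Hz)]; lia.
Qed.

Lemma sum_dyadic_weight_nonneg_le u L : 1 <= u -> NoDup L ->
  (forall z, In z L -> (0 <= z)%Z) -> sum_list (dyadic_weight u) L <= 2.
Proof.
  intros Hu Hnd Hnn. destruct (list_Z_bounded L) as [K HK].
  set (T := fun z : Z => 2 * u / (u + IZR z + 1)).
  eapply Rle_trans; [apply (sum_list_telescope (dyadic_weight u) T K); auto|].
  - intros z Hz. apply dyadic_weight_telescope; [lra | lia].
  - intros z Hz. unfold T. rewrite minus_IZR. assert (0 <= IZR z) by (apply IZR_le; lia).
    unfold Rdiv. apply Rmult_le_compat_l; [lra|]. apply Rinv_le_contravar; lra.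
  - unfold T. replace (2 * u / (u + IZR (-1) + 1)) with 2 by (simpl; field; lra).
    rewrite minus_IZR.
    assert (0 < 2 * u / (u + (IZR (Z.of_nat K) - 1) + 1)).
    { apply Rdiv_lt_0_compat; [lra|]. rewrite <- INR_IZR_INZ. pose proof (pos_INR K). lra. }
    lra.
Qed.

Lemma sum_dyadic_weight_le u L : 1 <= u -> NoDup L -> sum_list (dyadic_weight u) L <= 4.
Proof.
  intros Hu Hnd.
  rewrite (sum_list_filter _ (fun z => Z.leb 0 z)).
  assert (Hnonneg : sum_list (dyadic_weight u) (filter (fun z => Z.leb 0 z) L) <= 2).
  { apply sum_dyadic_weight_nonneg_le; [auto | apply NoDup_filter; auto|].
    intros z Hz. apply filter_In in Hz as [_ Hz]. apply Z.leb_le; auto. }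
  assert (Hneg : sum_list (dyadic_weight u) (filter (fun z => negb (Z.leb 0 z)) L) <= 2).
  { rewrite (sum_list_ext _ (fun z => dyadic_weight u (-1 - z)))
      by (intros; rewrite dyadic_weight_reflect; auto).
    rewrite <- sum_list_map. apply sum_dyadic_weight_nonneg_le; auto.
    - apply NoDup_map_NoDup_ForallPairs; [|apply NoDup_filter; auto].
      intros x y _ _ E. lia.
    - intros z Hz. apply in_map_iff in Hz as [y [<- Hy]].
      apply filter_In in Hy as [_ Hy]. destruct (Z.leb_spec 0 y); simpl in Hy; [discriminate | lia]. }
  lra.
Qed.

Lemma lower_sum_lub_nonneg n A g I : is_lub (lower_sum n A g) I -> 0 <= I.
Proof.
  intros [Hub _]. apply Hub. exists 0%nat, []. repeat split; constructor.
Qed.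

Lemma lower_sum_single n A g k z m :
  (forall x, dcube n k z x -> A x) -> (forall x, dcube n k z x -> m <= g x) ->
  lower_sum n A g (m / 2 ^ (k * n)).
Proof.
  intros HA Hg. exists k, [(z, m)].
  split; [repeat constructor|]. split; [constructor; [split; auto | constructor]|].
  simpl; ring.
Qed.

Definition weight (n : nat) (x : Rn) : R := prodn n (fun j => / (1 + x j ^ 2)).

Lemma far_end_in_cube n k z : dcube n k z (fun j => far_end (z j) / 2 ^ k).
Proof.
  intros j _. assert (0 < / 2 ^ k) by (apply Rinv_0_lt_compat, pow_lt; lra).
  unfold far_end, Rdiv. destruct (Z.leb 0 (z j)); split; apply Rmult_le_compat_r; lra.
Qed.

Lemma cube_term_le_weight n k z m g K :
  (forall x, g x <= K * weight n x) -> 0 <= K -> (forall x, dcube n k z x -> m <= g x) ->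
  m / 2 ^ (k * n) <= K * prodn n (fun j => dyadic_weight (2 ^ k) (z j)).
Proof.
  intros Hg HK Hm.
  set (u := 2 ^ k). assert (Hu : 0 < u) by (apply pow_lt; lra).
  set (pt := fun j => far_end (z j) / u).
  pose proof (Rle_trans _ _ _ (Hm pt (far_end_in_cube n k z)) (Hg pt)) as Hpt.
  assert (Hprod : weight n pt / u ^ n = prodn n (fun j => dyadic_weight u (z j))).
  { unfold weight, Rdiv. rewrite <- prodn_const, <- prodn_inv, <- prodn_mult.
    apply prodn_ext. intros j _. unfold pt, dyadic_weight.
    pose proof (pow2_ge_0 (far_end (z j))). field. split; nra. }
  rewrite pow_mult, <- Hprod. fold u.
  assert (0 < u ^ n) by (apply pow_lt; lra).
  unfold Rdiv. rewrite <- Rmult_assoc. apply Rmult_le_compat_r; [left; apply Rinv_0_lt_compat|]; lra.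
Qed.

Lemma lower_sum_le_weight n A g K : (forall x, g x <= K * weight n x) -> 0 <= K ->
  forall s, lower_sum n A g s -> s <= K * 4 ^ n.
Proof.
  intros Hg HK s [k [cs [Hd [Hf ->]]]].
  change (sum_list (fun p => snd p / 2 ^ (k * n)) cs <= K * 4 ^ n).
  rewrite Forall_forall in Hf.
  eapply Rle_trans.
  - apply (sum_list_le _ (fun p => prodn n (fun j => dyadic_weight (2 ^ k) (fst p j)) * K)).
    intros p Hp. rewrite Rmult_comm. apply (cube_term_le_weight n k (fst p) (snd p) g K); auto.
    apply Hf; auto.
  - rewrite sum_list_mult_r, Rmult_comm. apply Rmult_le_compat_l; auto.
    apply (sum_prodn_distinct_le (dyadic_weight (2 ^ k)) 4).
    + intros; apply dyadic_weight_nonneg, pow_lt; lra.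
    + intros L HL. apply sum_dyadic_weight_le; auto. apply pow_R1_Rle; lra.
    + exact Hd.
Qed.

(** * Gaussian decay against polynomial growth *)

Lemma exp_neg_sq_le t : exp (- (t ^ 2)) <= / (1 + t ^ 2).
Proof.
  rewrite exp_Ropp. apply Rinv_le_contravar; [pose proof (pow2_ge_0 t); lra|].
  apply exp_ineq1_le.
Qed.

Lemma pow_mul_exp_neg_le u m : 0 <= u -> (1 <= m)%nat -> u ^ m * exp (- u) <= INR m ^ m.
Proof.
  intros Hu Hm. assert (Hm' : 0 < INR m) by (apply lt_0_INR; lia).
  assert (Hq : 0 <= u / INR m) by (apply Rmult_le_pos; [lra | left; apply Rinv_0_lt_compat; lra]).
  assert (H1 : (u / INR m) ^ m <= exp (u - INR m)).
  { apply Rle_trans with (exp (u / INR m - 1) ^ m).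
    - apply pow_incr. pose proof (exp_ineq1_le (u / INR m - 1)). lra.
    - rewrite exp_pow. right. f_equal. field. lra. }
  replace (u ^ m) with (INR m ^ m * (u / INR m) ^ m)
    by (rewrite <- Rpow_mult_distr; f_equal; field; lra).
  rewrite Rmult_assoc. rewrite <- (Rmult_1_r (INR m ^ m)) at 2.
  apply Rmult_le_compat_l; [apply pow_le; lra|].
  apply Rle_trans with (exp (u - INR m) * exp (- u)).
  - apply Rmult_le_compat_r; [left; apply exp_pos | exact H1].
  - rewrite <- exp_plus, <- exp_0. apply exp_le_exp. lra.
Qed.

Definition gauss_moment_const (N : nat) : R := 4 ^ (N + 1) * (1 + INR (N + 1) ^ (N + 1)).

Lemma gauss_moment_const_nonneg N : 0 <= gauss_moment_const N.
Proof.
  unfold gauss_moment_const. apply Rmult_le_pos; [apply pow_le; lra|].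
  pose proof (pow_le (INR (N + 1)) (N + 1) (pos_INR _)). lra.
Qed.

Lemma gauss_mul_pow_le t N :
  exp (- (t ^ 2)) * (1 + Rabs t) ^ (2 * N) <= gauss_moment_const N * / (1 + t ^ 2).
Proof.
  set (a := Rabs t). assert (Ha : 0 <= a) by apply Rabs_pos.
  replace (t ^ 2) with (a ^ 2) by (unfold a; apply pow2_abs).
  set (m := (N + 1)%nat).
  assert (Hp : 0 < 1 + a ^ 2) by nra.
  apply (Rmult_le_reg_r (1 + a ^ 2)); auto.
  replace (gauss_moment_const N * / (1 + a ^ 2) * (1 + a ^ 2)) with (gauss_moment_const N)
    by (field; lra).
  assert (E1 : (1 + a) ^ (2 * N) * (1 + a ^ 2) <= ((1 + a) ^ 2) ^ m).
  { unfold m. rewrite <- pow_mult. replace (2 * (N + 1))%nat with (2 * N + 2)%nat by lia.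
    rewrite pow_add. apply Rmult_le_compat_l; [apply pow_le; lra | nra]. }
  assert (E2 : ((1 + a) ^ 2) ^ m <= 4 ^ m * (1 + (a ^ 2) ^ m)).
  { assert (0 <= (a ^ 2) ^ m) by (apply pow_le; nra).
    assert (0 <= 4 ^ m) by (apply pow_le; lra).
    destruct (Rle_dec a 1).
    - apply Rle_trans with (4 ^ m); [apply pow_incr; nra | nra].
    - apply Rle_trans with ((4 * a ^ 2) ^ m); [apply pow_incr; nra|].
      rewrite Rpow_mult_distr. nra. }
  assert (E3 : (a ^ 2) ^ m * exp (- (a ^ 2)) <= INR m ^ m)
    by (apply pow_mul_exp_neg_le; [nra | unfold m; lia]).
  assert (E4 : exp (- (a ^ 2)) <= 1) by (rewrite <- exp_0; apply exp_le_exp; nra).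
  assert (0 <= 4 ^ m) by (apply pow_le; lra).
  unfold gauss_moment_const. fold m.
  apply Rle_trans with (exp (- (a ^ 2)) * (4 ^ m * (1 + (a ^ 2) ^ m))).
  - rewrite Rmult_assoc. apply Rmult_le_compat_l; [left; apply exp_pos | lra].
  - replace (exp (- (a ^ 2)) * (4 ^ m * (1 + (a ^ 2) ^ m)))
      with (4 ^ m * (exp (- (a ^ 2)) + (a ^ 2) ^ m * exp (- (a ^ 2)))) by ring.
    apply Rmult_le_compat_l; lra.
Qed.

Lemma gauss_moment_const_le N : gauss_moment_const N <= 8 * 8 ^ N * (INR N + 1) ^ N.
Proof.
  unfold gauss_moment_const. rewrite plus_INR. simpl (INR 1).
  set (m := INR N + 1). assert (Hm : 1 <= m) by (unfold m; pose proof (pos_INR N); lra).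
  assert (Hm2 : m <= 2 ^ N).
  { unfold m. induction N as [|k IH]; [simpl; lra|].
    rewrite S_INR. simpl. pose proof (pow_R1_Rle 2 k ltac:(lra)). pose proof (pos_INR k). lra. }
  assert (1 <= m ^ N) by (apply pow_R1_Rle; lra).
  assert (H4 : 0 < 4 ^ N) by (apply pow_lt; lra).
  rewrite !pow_add, pow_1.
  replace (8 ^ N) with (4 ^ N * 2 ^ N) by (rewrite <- Rpow_mult_distr; f_equal; ring).
  assert (m ^ N * m <= m ^ N * 2 ^ N) by (apply Rmult_le_compat_l; lra).
  replace (8 * (4 ^ N * 2 ^ N) * m ^ N) with (4 ^ N * 4 * (2 * (m ^ N * 2 ^ N))) by ring.
  apply Rmult_le_compat_l; nra.
Qed.

Lemma exists_max_index m (f : nat -> R) : (1 <= m)%nat ->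
  exists j0, (j0 < m)%nat /\ forall j, (j < m)%nat -> f j <= f j0.
Proof.
  induction m as [|m IH]; intros Hm; [lia|].
  destruct (Nat.eq_dec m 0) as [->|Hm0].
  - exists 0%nat; split; [lia|]. intros j Hj. replace j with 0%nat by lia. lra.
  - destruct (IH ltac:(lia)) as [j0 [Hj0 Hmax]].
    destruct (Rle_dec (f m) (f j0)).
    + exists j0; split; [lia|]. intros j Hj.
      destruct (Nat.eq_dec j m); [subst; auto | apply Hmax; lia].
    + exists m; split; [lia|]. intros j Hj.
      destruct (Nat.eq_dec j m); [subst; lra|]. pose proof (Hmax j ltac:(lia)). lra.
Qed.

Lemma gauss_mul_pow_le_weight n N x j0 : (j0 < n)%nat ->
  prodn n (fun j => exp (- (x j ^ 2))) * (1 + Rabs (x j0)) ^ (2 * N)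
  <= gauss_moment_const N * weight n x.
Proof.
  intros Hj0. rewrite Rmult_comm.
  unfold weight. rewrite <- !(prodn_update n _ j0) by auto.
  apply prodn_le. intros j Hj. destruct (Nat.eqb_spec j j0).
  - subst j. split.
    + apply Rmult_le_pos; [apply pow_le; pose proof (Rabs_pos (x j0)); lra | left; apply exp_pos].
    + rewrite Rmult_comm. apply gauss_mul_pow_le.
  - split; [left; apply exp_pos | apply exp_neg_sq_le].
Qed.

Definition center_const (n : nat) (x0 : Rn) (rho : R) : R :=
  1 + (1 + sumn n (fun j => Rabs (x0 j))) / rho.

Lemma growth_factor_le n x x0 rho j0 : 0 < rho -> (1 <= n)%nat ->
  (forall j, (j < n)%nat -> Rabs (x j) <= Rabs (x j0)) ->
  1 + l1_dist n x x0 / rho <= center_const n x0 rho * INR n * (1 + Rabs (x j0)).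
Proof.
  intros Hr Hn Hmax. unfold center_const.
  set (T := sumn n (fun j => Rabs (x j))).
  set (A := sumn n (fun j => Rabs (x0 j))).
  assert (HA : 0 <= A) by (apply sumn_nonneg; intros; apply Rabs_pos).
  assert (HT : 0 <= T) by (apply sumn_nonneg; intros; apply Rabs_pos).
  assert (HST : l1_dist n x x0 <= T + A).
  { unfold T, A, l1_dist. rewrite <- sumn_plus. apply sumn_le. intros j _.
    unfold Rminus. eapply Rle_trans; [apply Rabs_triang|]. rewrite Rabs_Ropp. lra. }
  assert (HTn : 1 + T <= INR n * (1 + Rabs (x j0))).
  { assert (T <= INR n * Rabs (x j0)) by (unfold T; rewrite <- sumn_const; apply sumn_le; auto).
    assert (1 <= INR n) by (apply (le_INR 1); auto). pose proof (Rabs_pos (x j0)). nra. }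
  assert (Hkey : 1 + l1_dist n x x0 / rho <= (1 + (1 + A) / rho) * (1 + T)).
  { assert (l1_dist n x x0 / rho <= (T + A) / rho)
      by (apply Rmult_le_compat_r; [left; apply Rinv_0_lt_compat|]; lra).
    replace ((1 + (1 + A) / rho) * (1 + T)) with (1 + T + (T + A) / rho + (1 + A * T) / rho)
      by (field; lra).
    assert (0 <= (1 + A * T) / rho)
      by (apply Rmult_le_pos; [nra | left; apply Rinv_0_lt_compat; lra]).
    lra. }
  assert (0 <= (1 + A) / rho) by (apply Rmult_le_pos; [lra | left; apply Rinv_0_lt_compat; lra]).
  rewrite Rmult_assoc. eapply Rle_trans; [exact Hkey|]. apply Rmult_le_compat_l; lra.
Qed.

Lemma weighted_growth_le n N x x0 rho : (1 <= n)%nat -> 0 < rho ->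
  prodn n (fun j => exp (- (x j ^ 2))) * (3 * (1 + l1_dist n x x0 / rho)) ^ (2 * N)
  <= (9 * center_const n x0 rho ^ 2 * INR n ^ 2) ^ N * gauss_moment_const N * weight n x.
Proof.
  intros Hn Hr.
  destruct (exists_max_index n (fun j => Rabs (x j)) Hn) as [j0 [Hj0 Hmax]].
  set (k := center_const n x0 rho).
  assert (Hgrowth : 0 <= 3 * (1 + l1_dist n x x0 / rho) <= 3 * (k * INR n * (1 + Rabs (x j0)))).
  { pose proof (growth_factor_le n x x0 rho j0 Hr Hn Hmax) as Hg. fold k in Hg.
    pose proof (l1_dist_nonneg n x x0).
    assert (0 <= l1_dist n x x0 / rho) by (apply Rmult_le_pos; [lra | left; apply Rinv_0_lt_compat; lra]).
    lra. }
  assert (HP0 : 0 <= prodn n (fun j => exp (- (x j ^ 2))))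
    by (apply prodn_nonneg; intros; left; apply exp_pos).
  eapply Rle_trans; [apply Rmult_le_compat_l, pow_incr; [exact HP0 | exact Hgrowth]|].
  replace ((3 * (k * INR n * (1 + Rabs (x j0)))) ^ (2 * N))
    with ((9 * k ^ 2 * INR n ^ 2) ^ N * (1 + Rabs (x j0)) ^ (2 * N))
    by (rewrite !pow_mult, <- Rpow_mult_distr; f_equal; ring).
  set (Q := 9 * k ^ 2 * INR n ^ 2).
  assert (HQ : 0 <= Q ^ N) by (apply pow_le; unfold Q; pose proof (pow2_ge_0 (k * INR n)); nra).
  replace (prodn n (fun j => exp (- (x j ^ 2))) * (Q ^ N * (1 + Rabs (x j0)) ^ (2 * N)))
    with (Q ^ N * (prodn n (fun j => exp (- (x j ^ 2))) * (1 + Rabs (x j0)) ^ (2 * N)))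
    by ring.
  rewrite Rmult_assoc. apply Rmult_le_compat_l; auto.
  apply gauss_mul_pow_le_weight; auto.
Qed.

(** * A dyadic cube where the polynomial is large *)

Lemma dyadic_cube_near n x0 rho xs delta k : 0 < delta <= rho -> 2 <= delta * 2 ^ k ->
  box n x0 rho xs ->
  exists z, forall y, dcube n k z y ->
    box n x0 rho y /\ forall j, (j < n)%nat -> Rabs (y j - xs j) <= delta.
Proof.
  intros Hd Hk Hxs.
  set (u := 2 ^ k) in Hk. assert (Hu : 0 < u) by (apply pow_lt; lra).
  set (l := fun j => if Rle_dec (xs j) (x0 j) then xs j else xs j - delta).
  exists (fun j => up (l j * u)).
  assert (Hyl : forall y j, dcube n k (fun j => up (l j * u)) y -> (j < n)%nat ->
                  l j <= y j <= l j + delta).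
  { intros y j Hy Hj. destruct (Hy j Hj) as [Y1 Y2]. fold u in Y1, Y2.
    destruct (archimed (l j * u)) as [A1 A2].
    set (Zj := IZR (up (l j * u))) in *.
    assert (Zj <= y j * u).
    { replace Zj with (Zj / u * u) by (field; lra). apply Rmult_le_compat_r; lra. }
    assert (y j * u <= Zj + 1).
    { replace (Zj + 1) with ((Zj + 1) / u * u) by (field; lra). apply Rmult_le_compat_r; lra. }
    split; apply (Rmult_le_reg_r u); lra. }
  intros y Hy.
  assert (Hj : forall j, (j < n)%nat -> Rabs (y j - xs j) <= delta /\ Rabs (y j - x0 j) <= rho).
  { intros j Hj. pose proof (Hyl y j Hy Hj) as Hb. pose proof (Rabs_le_inv _ _ (Hxs j Hj)).
    unfold l in Hb. destruct (Rle_dec (xs j) (x0 j)); split; apply Rabs_le; lra. }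
  split; intros j Hjn; apply Hj; auto.
Qed.

Lemma pow2_level_split L0 N : 2 ^ (L0 + 5 * N) = 2 ^ L0 * 32 ^ N.
Proof. rewrite pow_add, pow_mult. f_equal. f_equal. simpl; ring. Qed.

Lemma pow2_level_pow L0 N n : 2 ^ ((L0 + 5 * N) * n) = (2 ^ L0) ^ n * (32 ^ n) ^ N.
Proof.
  rewrite pow_mult, pow2_level_split, Rpow_mult_distr, <- !pow_mult.
  do 2 f_equal. lia.
Qed.

(* The side [2^-(L0 + 5N)] is at most [rho / (16 n 24^N)], small enough for
   [is_poly_Rn_lipschitz] to lose at most [M/4] across the cube. *)
Lemma large_on_dyadic_cube n N P x0 rho M xs L0 : (1 <= n)%nat -> is_poly_Rn n N P -> 0 < rho ->
  (forall x, box n x0 rho x -> Rabs (P x) <= M) -> box n x0 rho xs -> M / 2 < Rabs (P xs) ->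
  32 * INR n / rho <= 2 ^ L0 ->
  exists z, forall y, dcube n (L0 + 5 * N) z y -> box n x0 rho y /\ M / 4 <= Rabs (P y).
Proof.
  intros Hn HP Hr HM Hxs Hbig HL0.
  assert (HM0 : 0 < M) by (pose proof (HM xs Hxs); pose proof (Rabs_pos (P xs)); lra).
  assert (Hn' : 1 <= INR n) by (apply (le_INR 1); auto).
  assert (H24 : 1 <= 24 ^ N) by (apply pow_R1_Rle; lra).
  assert (HK : 1 <= 16 * INR n * 24 ^ N) by nra.
  set (delta := rho / (16 * INR n * 24 ^ N)).
  assert (Hd : 0 < delta <= rho).
  { unfold delta. split; [apply Rdiv_lt_0_compat; lra|].
    replace rho with (rho * (16 * INR n * 24 ^ N) / (16 * INR n * 24 ^ N)) at 2 by (field; lra).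
    unfold Rdiv. apply Rmult_le_compat_r; [left; apply Rinv_0_lt_compat|]; nra. }
  assert (Hlevel : 2 <= delta * 2 ^ (L0 + 5 * N)).
  { rewrite pow2_level_split.
    assert (Hr2 : 32 * INR n <= 2 ^ L0 * rho).
    { replace (32 * INR n) with (32 * INR n / rho * rho) by (field; lra).
      apply Rmult_le_compat_r; lra. }
    assert (24 ^ N <= 32 ^ N) by (apply pow_incr; lra).
    replace (delta * (2 ^ L0 * 32 ^ N)) with (2 ^ L0 * rho * 32 ^ N / (16 * INR n * 24 ^ N))
      by (unfold delta; field; lra).
    replace 2 with (2 * (16 * INR n * 24 ^ N) / (16 * INR n * 24 ^ N)) at 1 by (field; lra).
    unfold Rdiv. apply Rmult_le_compat_r; [left; apply Rinv_0_lt_compat; lra|].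
    apply Rle_trans with (32 * INR n * 24 ^ N); [lra|]. apply Rmult_le_compat; nra. }
  destruct (dyadic_cube_near n x0 rho xs delta (L0 + 5 * N) Hd Hlevel Hxs) as [z Hz].
  exists z. intros y Hy. destruct (Hz y Hy) as [Hyb Hyd]. split; auto.
  assert (Hdist : l1_dist n y xs <= INR n * delta)
    by (unfold l1_dist; rewrite <- sumn_const; apply sumn_le; auto).
  assert (Hlip : Rabs (P y - P xs) <= M / 4).
  { eapply Rle_trans; [apply (is_poly_Rn_lipschitz n N P x0 rho M); auto|].
    replace (M / 4) with (4 * M * 24 ^ N / rho * (INR n * delta)) by (unfold delta; field; nra).
    apply Rmult_le_compat_l; auto.
    apply Rmult_le_pos; [nra | left; apply Rinv_0_lt_compat; lra]. }
  pose proof (Rabs_triang (P y) (P xs - P y)). rewrite Rabs_minus_sym in Hlip.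
  replace (P y + (P xs - P y)) with (P xs) in * by ring. lra.
Qed.

Definition near_sup_on_box (n : nat) (x0 : Rn) (rho : R) (P : Rn -> R) (M : R) : Prop :=
  0 <= M /\ (forall x, box n x0 rho x -> Rabs (P x) <= M) /\
  (0 < M -> exists xs, box n x0 rho xs /\ M / 2 < Rabs (P xs)).

Lemma exists_near_sup_on_box n (P : Rn -> R) x0 rho : 0 <= rho ->
  (exists B, forall x, box n x0 rho x -> Rabs (P x) <= B) ->
  exists M, near_sup_on_box n x0 rho P M.
Proof.
  intros Hr [B HB].
  set (E := fun v => exists x, box n x0 rho x /\ v = Rabs (P x)).
  pose proof (box_center n x0 rho Hr) as Hx0.
  destruct (completeness E) as [M [Hub Hlub]].
  - exists B. intros v [x [Hx ->]]. apply HB; auto.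
  - exists (Rabs (P x0)), x0; auto.
  - exists M. split; [|split].
    + eapply Rle_trans; [apply Rabs_pos|]. apply Hub. exists x0; auto.
    + intros x Hx. apply Hub. exists x; auto.
    + intros HM. apply NNPP. intro Hnone.
      assert (M <= M / 2); [|lra].
      apply Hlub. intros v [x [Hx ->]]. apply Rnot_lt_le. intro Hlt. apply Hnone. exists x; auto.
Qed.

Lemma exists_pow2_ge X : exists L : nat, X <= 2 ^ L.
Proof.
  destruct (archimed X) as [HX _].
  exists (Z.to_nat (up X)).
  apply Rle_trans with (INR (Z.to_nat (up X))).
  - destruct (Z_le_gt_dec 0 (up X)).
    + rewrite INR_IZR_INZ, Z2Nat.id by auto. lra.
    + pose proof (pos_INR (Z.to_nat (up X))). assert (IZR (up X) <= 0) by (apply IZR_le; lia).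
      lra.
  - clear. induction (Z.to_nat (up X)) as [|k IH]; [simpl; lra|].
    rewrite S_INR. simpl. pose proof (pow_R1_Rle 2 k ltac:(lra)). lra.
Qed.

(** * Comparison of the two integrals *)

Definition gauss_floor (n : nat) (x0 : Rn) (rho : R) : R :=
  prodn n (fun j => exp (- ((Rabs (x0 j) + rho) ^ 2))).

Lemma gauss_sq_ge_floor n x0 rho y : 0 <= rho -> box n x0 rho y ->
  gauss_floor n x0 rho <= gauss n y ^ 2.
Proof.
  intros Hr Hy. rewrite gauss_sq. apply prodn_le. intros j Hj. split; [left; apply exp_pos|].
  apply exp_le_exp, Ropp_le_contravar, sq_le_of_Rabs_le.
  - pose proof (Rabs_pos (x0 j)). lra.
  - replace (y j) with ((y j - x0 j) + x0 j) by ring.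
    eapply Rle_trans; [apply Rabs_triang|]. pose proof (Hy j Hj). lra.
Qed.

Section HermiteLowerSums.

Variables (n : nat) (phi : nat -> R -> R) (x0 : Rn) (rho : R).
Hypotheses (Hn : (1 <= n)%nat) (Hh : hermite_functions phi) (Hrho : 0 < rho).

Let growth_const : R := 9 * center_const n x0 rho ^ 2 * INR n ^ 2.

Lemma abs2_f_le_weight N c d M :
  (forall x, box n x0 rho x -> Rabs (combo_poly phi n N c x) <= M) ->
  (forall x, box n x0 rho x -> Rabs (combo_poly phi n N d x) <= M) ->
  forall x, abs2_f phi n N c d x
            <= 2 * M ^ 2 * (growth_const ^ N * gauss_moment_const N) * weight n x.
Proof.
  intros Hc Hd x. rewrite abs2_f_factor, gauss_sq.
  set (B := 3 * (1 + l1_dist n x x0 / rho)).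
  assert (HB : 0 <= B ^ N).
  { apply pow_le. unfold B. pose proof (l1_dist_nonneg n x x0).
    assert (0 <= l1_dist n x x0 / rho) by (apply Rmult_le_pos; [lra | left; apply Rinv_0_lt_compat; lra]).
    lra. }
  assert (HM : 0 <= M).
  { pose proof (Hc x0 (box_center n x0 rho ltac:(lra))). pose proof (Rabs_pos (combo_poly phi n N c x0)). lra. }
  assert (Hsq : forall e, (forall x, box n x0 rho x -> Rabs (combo_poly phi n N e x) <= M) ->
                  combo_poly phi n N e x ^ 2 <= M ^ 2 * B ^ (2 * N)).
  { intros e He.
    replace (M ^ 2 * B ^ (2 * N)) with ((M * B ^ N) ^ 2)
      by (rewrite Rpow_mult_distr, <- pow_mult; do 2 f_equal; lia).
    apply sq_le_of_Rabs_le; [nra|].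
    apply (is_poly_Rn_growth n N _ x0 rho M); auto. apply is_poly_Rn_combo_poly; auto. }
  pose proof (Hsq c Hc). pose proof (Hsq d Hd).
  pose proof (weighted_growth_le n N x x0 rho Hn Hrho) as Hw. fold B growth_const in Hw.
  assert (HE : 0 <= prodn n (fun j => exp (- (x j ^ 2)))) by (apply prodn_nonneg; intros; left; apply exp_pos).
  apply Rle_trans with (2 * M ^ 2 * (prodn n (fun j => exp (- (x j ^ 2))) * B ^ (2 * N))).
  - nra.
  - rewrite (Rmult_assoc (2 * M ^ 2)). apply Rmult_le_compat_l; [nra | exact Hw].
Qed.

Lemma lower_sum_le_box_sup N c d M A I :
  (forall x, box n x0 rho x -> Rabs (combo_poly phi n N c x) <= M) ->
  (forall x, box n x0 rho x -> Rabs (combo_poly phi n N d x) <= M) ->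
  is_lub (lower_sum n A (abs2_f phi n N c d)) I ->
  I <= 2 * M ^ 2 * (growth_const ^ N * gauss_moment_const N) * 4 ^ n.
Proof.
  intros Hc Hd [_ Hlub]. apply Hlub. intros s Hs.
  apply (lower_sum_le_weight n A (abs2_f phi n N c d)); auto.
  - apply abs2_f_le_weight; auto.
  - assert (0 <= growth_const) by (unfold growth_const; pose proof (pow2_ge_0 (center_const n x0 rho * INR n)); nra).
    pose proof (gauss_moment_const_nonneg N). pose proof (pow2_ge_0 M).
    apply Rmult_le_pos; [lra | apply Rmult_le_pos; [apply pow_le|]; auto].
Qed.

Variables (omega : Rn -> Prop) (r : R).
Hypotheses (Hrr : rho < r)
  (Hball : forall y, (forall j, (j < n)%nat -> Rabs (y j - x0 j) < r) -> omega y).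

Lemma box_sup_sq_le_lower_sum N P g M xs L0 I : is_poly_Rn n N P ->
  (forall x, box n x0 rho x -> Rabs (P x) <= M) -> box n x0 rho xs -> M / 2 < Rabs (P xs) ->
  32 * INR n / rho <= 2 ^ L0 -> (forall y, gauss n y ^ 2 * P y ^ 2 <= g y) ->
  is_lub (lower_sum n omega g) I ->
  M ^ 2 <= 16 * 2 ^ ((L0 + 5 * N) * n) / gauss_floor n x0 rho * I.
Proof.
  intros HP HM Hxs Hbig HL0 Hg [Hub _].
  assert (HM0 : 0 < M) by (pose proof (HM xs Hxs); pose proof (Rabs_pos (P xs)); lra).
  destruct (large_on_dyadic_cube n N P x0 rho M xs L0 Hn HP Hrho HM Hxs Hbig HL0) as [z Hz].
  assert (Hcube : gauss_floor n x0 rho * (M / 4) ^ 2 / 2 ^ ((L0 + 5 * N) * n) <= I).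
  { apply Hub, (lower_sum_single n omega g (L0 + 5 * N) z).
    - intros y Hy. apply Hball. intros j Hj. destruct (Hz y Hy) as [Hb _]. specialize (Hb j Hj). lra.
    - intros y Hy. destruct (Hz y Hy) as [Hb HPy]. eapply Rle_trans; [|apply Hg].
      apply Rmult_le_compat; [|apply pow2_ge_0| apply gauss_sq_ge_floor; auto; lra|].
      + apply prodn_nonneg; intros; left; apply exp_pos.
      + rewrite <- (pow2_abs (P y)). apply sq_le_of_Rabs_le; [apply Rabs_pos|].
        rewrite Rabs_right; lra. }
  assert (Hg0 : 0 < gauss_floor n x0 rho) by (apply prodn_pos; intros; apply exp_pos).
  assert (H2 : 0 < 2 ^ ((L0 + 5 * N) * n)) by (apply pow_lt; lra).
  replace (M ^ 2) with (16 * 2 ^ ((L0 + 5 * N) * n) / gauss_floor n x0 rho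
                        * (gauss_floor n x0 rho * (M / 4) ^ 2 / 2 ^ ((L0 + 5 * N) * n)))
    by (field; lra).
  apply Rmult_le_compat_l; auto.
  apply Rmult_le_pos; [lra | left; apply Rinv_0_lt_compat; auto].
Qed.

Lemma max_near_sup_sq_le N c d Mc Md L0 I :
  near_sup_on_box n x0 rho (combo_poly phi n N c) Mc ->
  near_sup_on_box n x0 rho (combo_poly phi n N d) Md ->
  32 * INR n / rho <= 2 ^ L0 -> is_lub (lower_sum n omega (abs2_f phi n N c d)) I ->
  Rmax Mc Md ^ 2 <= 16 * 2 ^ ((L0 + 5 * N) * n) / gauss_floor n x0 rho * I.
Proof.
  intros Hc Hd HL0 HI.
  assert (Hone : forall e M, (e = c \/ e = d) -> near_sup_on_box n x0 rho (combo_poly phi n N e) M ->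
            M ^ 2 <= 16 * 2 ^ ((L0 + 5 * N) * n) / gauss_floor n x0 rho * I).
  { intros e M He [HM0 [HM Hsup]]. destruct (Req_dec M 0) as [->|HMne].
    - assert (0 < gauss_floor n x0 rho) by (apply prodn_pos; intros; apply exp_pos).
      assert (0 < 2 ^ ((L0 + 5 * N) * n)) by (apply pow_lt; lra).
      pose proof (lower_sum_lub_nonneg _ _ _ _ HI).
      replace (0 ^ 2) with 0 by ring. apply Rmult_le_pos; auto.
      apply Rmult_le_pos; [lra | left; apply Rinv_0_lt_compat; auto].
    - destruct (Hsup ltac:(lra)) as [xs [Hxs Hbig]].
      apply (box_sup_sq_le_lower_sum N (combo_poly phi n N e) (abs2_f phi n N c d) M xs L0); auto.
      + apply is_poly_Rn_combo_poly; auto.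
      + intros y. rewrite abs2_f_factor.
        pose proof (pow2_ge_0 (gauss n y)).
        pose proof (pow2_ge_0 (combo_poly phi n N c y)). pose proof (pow2_ge_0 (combo_poly phi n N d y)).
        destruct He as [-> | ->]; nra. }
  destruct (Rle_dec Md Mc).
  - rewrite Rmax_left by auto. apply (Hone c); auto.
  - rewrite Rmax_right by lra. apply (Hone d); auto.
Qed.

End HermiteLowerSums.

Lemma lower_sum_ratio_le n omega phi : (1 <= n)%nat -> open_n n omega -> (exists x, omega x) ->
  hermite_functions phi ->
  exists A0 A1, 0 <= A0 /\ 0 <= A1 /\
    forall N c d I_Rn I_omega,
      is_lub (lower_sum n (fun _ => True) (abs2_f phi n N c d)) I_Rn ->
      is_lub (lower_sum n omega (abs2_f phi n N c d)) I_omega ->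
      I_Rn <= A0 * A1 ^ N * (INR N + 1) ^ N * I_omega.
Proof.
  intros Hn Hopen [x0 Hx0] Hh.
  destruct (Hopen x0 Hx0) as [r [Hr Hball]].
  set (rho := r / 2). assert (Hrho : 0 < rho < r) by (unfold rho; lra).
  destruct (exists_pow2_ge (32 * INR n / rho)) as [L0 HL0].
  set (g0 := gauss_floor n x0 rho).
  set (Q := 9 * center_const n x0 rho ^ 2 * INR n ^ 2).
  assert (Hg0 : 0 < g0) by (apply prodn_pos; intros; apply exp_pos).
  assert (HQ : 0 <= Q) by (unfold Q; pose proof (pow2_ge_0 (center_const n x0 rho * INR n)); nra).
  assert (H2L : 0 < (2 ^ L0) ^ n) by (apply pow_lt, pow_lt; lra).
  assert (H32 : 0 < 32 ^ n) by (apply pow_lt; lra).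
  assert (H4 : 0 < 4 ^ n) by (apply pow_lt; lra).
  exists (256 * (2 ^ L0) ^ n * 4 ^ n / g0), (8 * 32 ^ n * Q).
  split; [apply Rmult_le_pos; [nra | left; apply Rinv_0_lt_compat; auto]|].
  split; [nra|].
  intros N c d I_Rn I_om HR Hom.
  destruct (exists_near_sup_on_box n (combo_poly phi n N c) x0 rho) as [Mc Hc];
    [lra | apply combo_poly_bounded_box; auto|].
  destruct (exists_near_sup_on_box n (combo_poly phi n N d) x0 rho) as [Md Hd];
    [lra | apply combo_poly_bounded_box; auto|].
  set (M := Rmax Mc Md).
  assert (Hup : I_Rn <= 2 * M ^ 2 * (Q ^ N * gauss_moment_const N) * 4 ^ n).
  { destruct Hc as [_ [Hc _]], Hd as [_ [Hd _]].
    apply (lower_sum_le_box_sup n phi x0 rho Hn Hh ltac:(lra) N c d M (fun _ => True)); auto;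
      intros x Hx; eapply Rle_trans; [apply Hc; auto | apply Rmax_l | apply Hd; auto | apply Rmax_r]. }
  assert (Hlow : M ^ 2 <= 16 * 2 ^ ((L0 + 5 * N) * n) / g0 * I_om)
    by (apply (max_near_sup_sq_le n phi x0 rho Hn Hh ltac:(lra) omega r ltac:(lra) Hball
                N c d Mc Md L0 I_om); auto).
  assert (HIom : 0 <= I_om) by (eapply lower_sum_lub_nonneg; eauto).
  assert (HQN : 0 <= Q ^ N) by (apply pow_le; auto).
  pose proof (gauss_moment_const_le N).
  eapply Rle_trans; [exact Hup|].
  apply Rle_trans with
    (2 * (16 * 2 ^ ((L0 + 5 * N) * n) / g0 * I_om) * (Q ^ N * (8 * 8 ^ N * (INR N + 1) ^ N)) * 4 ^ n).
  - apply Rmult_le_compat_r; [lra|]. apply Rmult_le_compat; try nra.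
    apply Rmult_le_pos, gauss_moment_const_nonneg; auto.
  - right. rewrite pow2_level_pow, !Rpow_mult_distr. field. lra.
Qed.

Lemma pow_bound_le_exp_form A0 A1 N C : 0 <= A0 -> 0 <= A1 -> A0 + A1 + 2 <= C ->
  A0 * A1 ^ N * (INR N + 1) ^ N <= (C * exp (1 / 2 * INR N * ln (INR N + 1) + C * INR N)) ^ 2.
Proof.
  intros HA0 HA1 HC.
  assert (HN1 : 0 < INR N + 1) by (pose proof (pos_INR N); lra).
  replace ((C * exp (1 / 2 * INR N * ln (INR N + 1) + C * INR N)) ^ 2)
    with (C ^ 2 * (exp (2 * C) ^ N * (INR N + 1) ^ N)).
  2:{ rewrite Rpow_mult_distr, <- (Rpower_pow N (INR N + 1) HN1), !exp_pow.
      unfold Rpower. rewrite <- exp_plus. f_equal. f_equal. simpl. field. }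
  rewrite Rmult_assoc. apply Rmult_le_compat; try nra.
  - apply Rmult_le_pos; apply pow_le; lra.
  - apply Rmult_le_compat_r; [apply pow_le; lra|]. apply pow_incr.
    pose proof (exp_ineq1_le (2 * C)). lra.
Qed.

Theorem mainTheorem1 (n : nat) (omega : Rn -> Prop) (phi : nat -> R -> R) :
  (1 <= n)%nat ->
  subset_Rn n omega ->
  open_n n omega ->
  (exists x, omega x) ->
  hermite_functions phi ->
  exists C : R, 1 < C /\
    forall (N : nat) (c d : list nat -> R) (I_Rn I_omega : R),
      is_lub (lower_sum n (fun _ => True) (abs2_f phi n N c d)) I_Rn ->
      is_lub (lower_sum n omega (abs2_f phi n N c d)) I_omega ->
      sqrt I_Rn <=
        C * exp (1 / 2 * INR N * ln (INR N + 1) + C * INR N) * sqrt I_omega.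
Proof.
  (* [open_n] already quantifies over points that only agree with [x] below [n]. *)
  intros Hn _ Hopen Hex Hh.
  destruct (lower_sum_ratio_le n omega phi Hn Hopen Hex Hh) as [A0 [A1 [HA0 [HA1 Hratio]]]].
  exists (A0 + A1 + 2). split; [lra|].
  intros N c d I_Rn I_omega HR Hom.
  set (K := (A0 + A1 + 2) * exp (1 / 2 * INR N * ln (INR N + 1) + (A0 + A1 + 2) * INR N)).
  assert (HK : 0 <= K) by (apply Rmult_le_pos; [lra | left; apply exp_pos]).
  assert (HIom : 0 <= I_omega) by (eapply lower_sum_lub_nonneg; eauto).
  rewrite <- (sqrt_pow2 K HK), <- sqrt_mult_alt by (apply pow2_ge_0).
  apply sqrt_le_1_alt. eapply Rle_trans; [apply (Hratio N c d); eauto|].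
  apply Rmult_le_compat_r; auto. apply pow_bound_le_exp_form; lra.
Qed.
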